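(* Let $\mathcal{R}$ be a TRS (left-hand sides possibly non-linear), $(S,s_0,L,\delta,\mathit{out}_L,\mathit{out}_{NL})$ the non-linear set automaton for $\mathcal{R}$, $t_0$ a ground term and $\mathit{select}$ a strategy. If $\textsc{NormalizeNonLinear}(t_0,\mathit{select})$ returns a term $t$, then $t$ is a normal form of $t_0$, i.e. $t_0\to^*t$ and $t$ has no redexes.
   Context: Terms: $\mathbb{F}$ finite ranked alphabet with arity $\#$, $\mathbb{V}$ variables. Positions are finite lists of positive integers; $\epsilon$ empty, $p.q$ concatenation, $p\le q$ means $p$ is a prefix of $q$. $\mathcal{D}(t)$ positions of $t$, $\mathcal{E}(t)$ variable positions, $t|_p$ subterm, $t[u]_p$ replacement, $\mathrm{hd}(t)$ head symbol. A TRS $\mathcal{R}$ is a finite nonempty set of rules $\ell\to r$ ($\ell\notin\mathbb{V}$, $\mathrm{vars}(r)\subseteq\mathrm{vars}(\ell)$) with left-hand sides $\mathcal{L}$. A redex of $t$ is $(\ell\to r)@p$ with $\ell\to r\in\mathcal{R}$ and $t|_p=\ell^\sigma$; $t[(\ell\to r)@p]=t[r^\sigma]_p$; $\to^*$ is the reflexive-transitive closure of one-step rewriting; a normal form has no redexes. $\pi(\ell)$ is the partition of $\mathcal{E}(\ell)$ into sets of positions holding the same variable; $\ell$ is linear iff $|\pi(\ell)|=|\mathcal{E}(\ell)|$. A term $u$ is consistent with $\pi(\ell)$ iff $u|_p=u|_q$ for all $P\in\pi(\ell)$, $p,q\in P$. Set automaton construction. $\mathrm{sub}(\mathcal{L})$: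 subterms $\ell|_q$, $\ell\in\mathcal{L}$, $q\in\mathcal{D}(\ell)\setminus\mathcal{E}(\ell)$. A match goal $\ell_1@p_1,\dots,\ell_n@p_n\hookrightarrow\ell@p$ ($n\ge1$) has nonempty obligation $mo=\{\ell_i@p_i\}$ ($\ell_i\in\mathrm{sub}(\mathcal{L})$) and announcement $\ell@p$ ($\ell\in\mathcal{L}$); $\mathrm{pos}(mo)=\{p_i\}$. States are nonempty sets of goals; $s_0=\{\ell@\epsilon\hookrightarrow\ell@\epsilon\mid\ell\in\mathcal{L}\}$; $S$ = states reachable from $s_0$. Each state $s$ has a fixed label $L(s)\in\mathrm{pos}(mo)$ for some goal $mo\hookrightarrow\ell@\epsilon\in s$. $\mathrm{reduce}(mo,f,p)=\{\ell'@q\in mo\mid q\ne p\}\cup\{\ell'|_i@p.i\mid\ell'@p\in mo,1\le i\le\#f,\ell'|_i\notin\mathbb{V}\}$. $\mathrm{deriv}(s,f)$ is the union of $\{\mathrm{reduce}(mo,f,L(s))\hookrightarrow ma\mid mo\hookrightarrow ma\in s,\exists\ell'.\ell'@L(s)\in mo\wedge\mathrm{hd}(\ell')=f,\mathrm{reduce}(mo,f,L(s))\ne\emptyset\}$, $\{mo\hookrightarrow ma\in s\mid L(s)\notin\mathrm{pos}(mo)\}$ and $\{\ell@L(s).i\hookrightarrow\ell@L(s).i\mid\ell\in\mathcal{L},1\le i\le\#f\}$. Goals are directly dependent if their obligation positions intersect; dependency is its transitive closure. For a dependency class $K$ of $\mathrm{deriv}(s,f)$, $\mathrm{gcp}(K)$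 is the greatest common prefix of its announcement positions and $\mathrm{lift}(K)$ removes that prefix from all positions in $K$. $\delta(s,f)=\{(\mathrm{lift}(K),\mathrm{gcp}(K))\mid K\}$; $\mathit{out}(s,f)=\{(\ell\to r)@p\mid\ell\to r\in\mathcal{R},f(x_1,\dots,x_{\#f})@L(s)\hookrightarrow\ell@p\in s,x_i\in\mathbb{V}\}$. The non-linear set automaton splits $\mathit{out}$: $\mathit{out}_L(s,f)$ consists of its elements with linear $\ell$, $\mathit{out}_{NL}(s,f)$ of those with non-linear $\ell$. For $X\in\{L,NL\}$: $\mathit{matches}_X(s,p,t)=\{(\ell\to r)@p.q\mid(\ell\to r)@q\in\mathit{out}_X(s,\mathrm{hd}(t|_{p.L(s)}))\}$. Configuration trees: $ct::=\mathit{bud}(s,p)\mid\mathit{node}(s,p,cts)$, $cts$ finite possibly empty set of configuration trees; $\mathit{buds}(ct)$, $\mathit{nodes}(ct)$ are the configurations labelling bud/node vertices. $\mathit{grow}(ct,s,p,t)$ replaces every $\mathit{bud}(s,p)$ in $ct$ by $\mathit{node}(s,p,\{\mathit{bud}(s',p.p')\mid(s',p')\in\delta(s,\mathrm{hd}(t|_{p.L(s)}))\})$. $\mathit{prune}(\mathit{bud}(s,p),q)=\mathit{bud}(s,p)$; $\mathit{prune}(\mathit{node}(s,p,cts),q)=\mathit{bud}(s,p)$ if $p.L(s)=q$, else $\mathit{node}(s,p,\{\mathit{prune}(c,q)\mid c\in cts\})$. $ct[p]$ is the subtree of $ct$ whose root configuration $(s,q)$ has $q.L(s)=p$. Strategy: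 a function that, whenever $\mathit{buds}(ct)\cup am\cup reds_L\cup en\ne\emptyset$, selects an element of that set. Procedure $\textsc{NormalizeNonLinear}(t_0,\mathit{select})$: $t:=t_0$; $reds_L,am,dis,en:=\emptyset$; $ct:=\mathit{bud}(s_0,\epsilon)$. While $\mathit{buds}(ct)$, $reds_L$, $en$ or $am$ is nonempty, select $a$. (a) If $a=(s,p)\in\mathit{buds}(ct)$: $ct:=\mathit{grow}(ct,s,p,t)$; $reds_L:=reds_L\cup\mathit{matches}_L(s,p,t)$; $am:=am\cup\mathit{matches}_{NL}(s,p,t)$. (b) If $a=(\ell\to r)@p\in am$: remove it from $am$; add it to $en$ if $t|_p$ is consistent with $\pi(\ell)$, else to $dis$. (c) If $a=(\ell\to r)@p\in reds_L\cup en$: let $N=\bigcup\{\mathit{matches}_{NL}(s,q,t)\mid(s,q)\in\mathit{nodes}(ct[p])\}$; set $reds_L:=reds_L\setminus\bigcup\{\mathit{matches}_L(s,q,t)\mid(s,q)\in\mathit{nodes}(ct[p])\}$; $en:=en\setminus N$; $dis:=dis\setminus N$; $rem:=\{(\ell'\to r')@q\in en\cup dis\mid\exists P\in\pi(\ell'):|P|\ge2\wedge\exists q'\in P: q.q'\le p\}$; $en:=en\setminus rem$; $dis:=dis\setminus rem$; $am:=(am\setminus N)\cup rem$; then $ct:=\mathit{prune}(ct,p)$ and $t:=t[(\ell\to r)@p]$. After the loop return $t$. *)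

From Stdlib Require Import List Relations.
Import ListNotations.
Set Implicit Arguments.

Inductive term (F V : Type) : Type :=
| Var (x : V)
| App (f : F) (args : list (term F V)).
Arguments Var {F V} x.
Arguments App {F V} f args.

(* Positions: lists of positive integers (argument indices start at 1). *)
Definition pos := list nat.
Definition prefix (p q : pos) : Prop := exists r, q = p ++ r.

Fixpoint upd_nth {A} (g : A -> A) (n : nat) (l : list A) : list A :=
  match l, n with
  | [], _ => []
  | a :: l', 0 => g a :: l'
  | a :: l', S n' => a :: upd_nth g n' l'
  end.

Section Terms.
Context {F V : Type}.
Notation term := (term F V).

Fixpoint subterm (t : term) (p : pos) : option term :=
  match p with
  | [] => Some t
  | i :: p' =>
      match t with
      | Var _ => None
      | App _ args =>
          match i with
          | 0 => None
          | S j => match nth_error args j with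
                   | Some u => subterm u p'
                   | None => None
                   end
          end
      end
  end.

(* t[u]_p  (only meaningful for p in D(t)) *)
Fixpoint replace (p : pos) (t u : term) {struct p} : term :=
  match p with
  | [] => u
  | i :: p' =>
      match t with
      | Var x => Var x
      | App f args => App f (upd_nth (fun a => replace p' a u) (i - 1) args)
      end
  end.

Fixpoint subst (sigma : V -> term) (t : term) : term :=
  match t with
  | Var x => sigma x
  | App f args => App f (map (subst sigma) args)
  end.

Definition head (t : term) : option F :=
  match t with Var _ => None | App f _ => Some f end.

Definition is_var (t : term) : Prop := exists x, t = Var x.

Definition occurs (x : V) (t : term) : Prop := exists p, subterm t p = Some (Var x).

Definition ground (t : term) : Prop := forall x, ~ occurs x t.

Definition wf (ar : F -> nat) (t : term) : Prop :=
  forall p f args, subterm t p = Some (App f args) -> length args = ar f.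

(* l is linear: every block of pi(l) is a singleton,
   i.e. |pi(l)| = |E(l)| *)
Definition linear (l : term) : Prop :=
  forall p q x, subterm l p = Some (Var x) -> subterm l q = Some (Var x) -> p = q.

(* u is consistent with pi(l): u|_p = u|_q for p,q in the same block *)
Definition consistent (l u : term) : Prop :=
  forall p q x, subterm l p = Some (Var x) -> subterm l q = Some (Var x) ->
    subterm u p = subterm u q.

Definition rule := (term * term)%type.

Definition isTRS (ar : F -> nat) (R : list rule) : Prop :=
  R <> [] /\
  forall l r, In (l, r) R ->
    ~ is_var l /\ (forall x, occurs x r -> occurs x l) /\ wf ar l /\ wf ar r.

Definition rewrite_step (R : list rule) (t t' : term) : Prop :=
  exists l r p sigma, In (l, r) R /\ subterm t p = Some (subst sigma l) /\
    t' = replace p t (subst sigma r).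

Definition rewrites (R : list rule) : term -> term -> Prop :=
  clos_refl_trans term (rewrite_step R).

Definition normal_form (R : list rule) (t : term) : Prop :=
  forall l r p sigma, In (l, r) R -> subterm t p <> Some (subst sigma l).

End Terms.

(* A match goal  mo |-> ma : obligation (a set of l'@p) and announcement l@p *)
Record goal (F V : Type) := Goal {
  gobl : (term F V * pos) -> Prop;
  gann : (term F V * pos) }.
Arguments Goal {F V} gobl gann.
Arguments gobl {F V} g _.
Arguments gann {F V} g.

Definition state (F V : Type) := goal F V -> Prop.

Section Automaton.
Context {F V : Type} (ar : F -> nat) (R : list (@rule F V)).
Notation term := (term F V).
Notation goal := (goal F V).
Notation state := (state F V).
Notation rule := (@rule F V).

Definition lhs : list term := map fst R.

Definition obl_pos (mo : (term * pos) -> Prop) : pos -> Prop :=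
  fun p => exists l, mo (l, p).

Definition s0 : state :=
  fun g => exists l, In l lhs /\ g = Goal (fun e => e = (l, [])) (l, []).

Definition reduce (mo : (term * pos) -> Prop) (f : F) (p : pos) : (term * pos) -> Prop :=
  fun e =>
    (mo e /\ snd e <> p) \/
    (exists l' i u, mo (l', p) /\ 1 <= i <= ar f /\ subterm l' [i] = Some u /\
       ~ is_var u /\ e = (u, p ++ [i])).

Section WithL.
Variable L : state -> pos.

Definition deriv (s : state) (f : F) : state :=
  fun g =>
    (exists mo ma, s (Goal mo ma) /\
       (exists l', mo (l', L s) /\ head l' = Some f) /\
       (exists e, reduce mo f (L s) e) /\
       g = Goal (reduce mo f (L s)) ma)
    \/ (s g /\ ~ obl_pos (gobl g) (L s))
    \/ (exists l i, In l lhs /\ 1 <= i <= ar f /\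
          g = Goal (fun e => e = (l, L s ++ [i])) (l, L s ++ [i])).

Definition ddep (g1 g2 : goal) : Prop :=
  exists p, obl_pos (gobl g1) p /\ obl_pos (gobl g2) p.

Definition dep_class (D K : state) : Prop :=
  exists g, D g /\
    forall g', K g' <-> (D g' /\
      clos_refl_trans goal (fun a b => D a /\ D b /\ ddep a b) g g').

Definition is_gcp (K : state) (p : pos) : Prop :=
  (forall g, K g -> prefix p (snd (gann g))) /\
  (forall p', (forall g, K g -> prefix p' (snd (gann g))) -> prefix p' p).

Definition drop_prefix (p q : pos) : pos := skipn (length p) q.

Definition lift_goal (p : pos) (g : goal) : goal :=
  Goal (fun e => exists l q, gobl g (l, q) /\ e = (l, drop_prefix p q))
       (fst (gann g), drop_prefix p (snd (gann g))).

Definition lift (p : pos) (K : state) : state :=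
  fun g => exists g0, K g0 /\ g = lift_goal p g0.

Definition delta (s : state) (f : F) : (state * pos) -> Prop :=
  fun sp => exists K, dep_class (deriv s f) K /\ is_gcp K (snd sp) /\
    fst sp = lift (snd sp) K.

Definition out_gen (X : term -> Prop) (s : state) (f : F) : (rule * pos) -> Prop :=
  fun rp => In (fst rp) R /\ X (fst (fst rp)) /\
    exists xs, length xs = ar f /\ Forall is_var xs /\
      s (Goal (fun e => e = (App f xs, L s)) (fst (fst rp), snd rp)).

Definition out_L := out_gen linear.
Definition out_NL := out_gen (fun l => ~ linear l).

Definition matches_gen (X : term -> Prop) (s : state) (p : pos) (t : term)
  : (rule * pos) -> Prop :=
  fun rp => exists f args q, subterm t (p ++ L s) = Some (App f args) /\
    out_gen X s f (fst rp, q) /\ snd rp = p ++ q.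

Definition matches_L := matches_gen linear.
Definition matches_NL := matches_gen (fun l => ~ linear l).

Inductive reachable : state -> Prop :=
| reach0 : reachable s0
| reachS s f s' p' : reachable s -> delta s f (s', p') -> reachable s'.

Definition valid_labelling : Prop :=
  forall s, reachable s -> exists mo l, s (Goal mo (l, [])) /\ obl_pos mo (L s).

Inductive ctree : Type :=
| Bud (s : state) (p : pos)
| Node (s : state) (p : pos) (kids : list ctree).

Inductive InBud : (state * pos) -> ctree -> Prop :=
| ib_here s p : InBud (s, p) (Bud s p)
| ib_kid c s p kids k : In k kids -> InBud c k -> InBud c (Node s p kids).

Inductive InNode : (state * pos) -> ctree -> Prop :=
| in_here s p kids : InNode (s, p) (Node s p kids)
| in_kid c s p kids k : In k kids -> InNode c k -> InNode c (Node s p kids).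

Inductive GrowR (s : state) (p : pos) (kids : list ctree) : ctree -> ctree -> Prop :=
| gr_bud_eq : GrowR s p kids (Bud s p) (Node s p kids)
| gr_bud_ne s' p' : (s', p') <> (s, p) -> GrowR s p kids (Bud s' p') (Bud s' p')
| gr_node s' p' cs cs' : Forall2 (GrowR s p kids) cs cs' ->
    GrowR s p kids (Node s' p' cs) (Node s' p' cs').

Fixpoint prune (ct : ctree) (q : pos) : ctree :=
  match ct with
  | Bud s p => Bud s p
  | Node s p cs =>
      if list_eq_dec PeanoNat.Nat.eq_dec (p ++ L s) q then Bud s p
      else Node s p (map (fun c => prune c q) cs)
  end.

Inductive Subtree : ctree -> ctree -> Prop :=
| st_refl c : Subtree c c
| st_kid c s p kids k : In k kids -> Subtree c k -> Subtree c (Node s p kids).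

Definition root_cfg (ct : ctree) : state * pos :=
  match ct with Bud s p => (s, p) | Node s p _ => (s, p) end.

Definition subtree_at (ct : ctree) (p : pos) (c : ctree) : Prop :=
  Subtree c ct /\ snd (root_cfg c) ++ L (fst (root_cfg c)) = p.

Record pstate := PState {
  ptm : term;
  pct : ctree;
  preds : (rule * pos) -> Prop;
  pam : (rule * pos) -> Prop;
  pdis : (rule * pos) -> Prop;
  pen : (rule * pos) -> Prop }.

Definition item := ((state * pos) + (rule * pos))%type.

Definition selectable (st : pstate) (a : item) : Prop :=
  match a with
  | inl c => InBud c (pct st)
  | inr rp => pam st rp \/ preds st rp \/ pen st rp
  end.

Definition strategy (select : pstate -> item) : Prop :=
  forall st, (exists a, selectable st a) -> selectable st (select st).

Definition setU {A} (X Y : A -> Prop) : A -> Prop := fun a => X a \/ Y a.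
Definition setD {A} (X Y : A -> Prop) : A -> Prop := fun a => X a /\ ~ Y a.
Definition set0 {A} : A -> Prop := fun _ => False.

Inductive Step (select : pstate -> item) : pstate -> pstate -> Prop :=
| step_bud st s p f args kids ct' :
    select st = inl (s, p) ->
    InBud (s, p) (pct st) ->
    subterm (ptm st) (p ++ L s) = Some (App f args) ->
    (forall c, In c kids <-> exists s' p', delta s f (s', p') /\ c = Bud s' (p ++ p')) ->
    GrowR s p kids (pct st) ct' ->
    Step select st
      (PState (ptm st) ct'
              (setU (preds st) (matches_L s p (ptm st)))
              (setU (pam st) (matches_NL s p (ptm st)))
              (pdis st) (pen st))
| step_am_en st rl p u :
    select st = inr (rl, p) ->
    pam st (rl, p) ->
    subterm (ptm st) p = Some u ->
    consistent (fst rl) u ->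
    Step select st
      (PState (ptm st) (pct st) (preds st)
              (setD (pam st) (fun a => a = (rl, p)))
              (pdis st) (setU (pen st) (fun a => a = (rl, p))))
| step_am_dis st rl p u :
    select st = inr (rl, p) ->
    pam st (rl, p) ->
    subterm (ptm st) p = Some u ->
    ~ consistent (fst rl) u ->
    Step select st
      (PState (ptm st) (pct st) (preds st)
              (setD (pam st) (fun a => a = (rl, p)))
              (setU (pdis st) (fun a => a = (rl, p))) (pen st))
| step_rewrite st l r p c sigma :
    select st = inr ((l, r), p) ->
    (preds st ((l, r), p) \/ pen st ((l, r), p)) ->
    subtree_at (pct st) p c ->
    subterm (ptm st) p = Some (subst sigma l) ->
    let t := ptm st in
    let N := fun a => exists sq, InNode sq c /\ matches_NL (fst sq) (snd sq) t a in
    let ML := fun a => exists sq, InNode sq c /\ matches_L (fst sq) (snd sq) t a in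
    let en1 := setD (pen st) N in
    let dis1 := setD (pdis st) N in
    let rem := fun (a : rule * pos) =>
      setU en1 dis1 a /\
      exists x q1 q2 q', q1 <> q2 /\
        subterm (fst (fst a)) q1 = Some (Var x) /\
        subterm (fst (fst a)) q2 = Some (Var x) /\
        subterm (fst (fst a)) q' = Some (Var x) /\
        prefix (snd a ++ q') p in
    Step select st
      (PState (replace p t (subst sigma r)) (prune (pct st) p)
              (setD (preds st) ML)
              (setU (setD (pam st) N) rem)
              (setD dis1 rem) (setD en1 rem)).

Definition init_pstate (t0 : term) : pstate :=
  PState t0 (Bud s0 []) set0 set0 set0 set0.

Definition finished (st : pstate) : Prop :=
  (forall c, ~ InBud c (pct st)) /\ (forall a, ~ preds st a) /\
  (forall a, ~ pen st a) /\ (forall a, ~ pam st a).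

Definition normalize_returns (select : pstate -> item) (t0 t : term) : Prop :=
  exists st, clos_refl_trans pstate (Step select) (init_pstate t0) st /\
    finished st /\ ptm st = t.

End WithL.
End Automaton.

Definition finite_type (A : Type) : Prop := exists l : list A, forall a, In a l.

(* Along every run we maintain an invariant of the configuration tree and of the sets
   reds_L, am, en and dis.  Every node (s, p) inspects a function symbol at p.L(s), its
   children are exactly its delta-successors, and the obligation regions of siblings are
   disjoint; so distinct nodes inspect distinct positions, and the node reporting a match
   (l -> r)@q is determined by the match: it inspects a position of the pattern l at q
   and its ancestors inspect all the others.  Every match reported by a node is in
   reds_L, am, en or dis; every element of am, en and dis is a non-linear match reported
   by some node; every element of dis is inconsistent.
   A rewrite at p changes the term only below p and discards all matches reported
   inside the pruned subtree ct[p], so the reports of the remaining nodes are unchanged;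
   an inconsistency outside ct[p] can only be repaired by a rewrite below a repeated
   variable position, and rem sends exactly those matches back to am.
   When the loop stops there are no buds, so following the goals announcing l down the
   tree shows that every redex l.sigma is reported; it can then only lie in dis,
   contradicting the consistency of l.sigma with pi(l).  Only rewriting steps change
   the term, hence t0 ->* t. *)

From Stdlib Require Import List Relations Classical FunctionalExtensionality PropExtensionality Lia.
Import ListNotations.

Lemma prefix_refl (p : pos) : prefix p p.
Proof. exists []. now rewrite app_nil_r. Qed.

Lemma prefix_trans (a b c : pos) : prefix a b -> prefix b c -> prefix a c.
Proof. intros [r1 ->] [r2 ->]. exists (r1 ++ r2). now rewrite app_assoc. Qed.

Lemma prefix_app (a r : pos) : prefix a (a ++ r).
Proof. now exists r. Qed.

Lemma prefix_length (a b : pos) : prefix a b -> length a <= length b.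
Proof. intros [r ->]. rewrite length_app. lia. Qed.

Lemma prefix_length_eq (a b : pos) : prefix a b -> length a = length b -> a = b.
Proof.
  intros [r ->] H. rewrite length_app in H.
  destruct r; [now rewrite app_nil_r | simpl in H; lia].
Qed.

Lemma prefix_antisym (a b : pos) : prefix a b -> prefix b a -> a = b.
Proof. intros Hab Hba. apply prefix_length_eq; auto. apply prefix_length in Hab, Hba. lia. Qed.

Lemma prefix_app_l (p a b : pos) : prefix a b -> prefix (p ++ a) (p ++ b).
Proof. intros [r ->]. exists r. now rewrite app_assoc. Qed.

Lemma prefix_app_l_inv (p a b : pos) : prefix (p ++ a) (p ++ b) -> prefix a b.
Proof. intros [r H]. exists r. rewrite <- app_assoc in H. now apply app_inv_head in H. Qed.

Lemma prefix_cons_inv (i : nat) (a b : pos) : prefix (i :: a) (i :: b) -> prefix a b.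
Proof. exact (prefix_app_l_inv [i] a b). Qed.

Lemma prefix_comparable (a b y : pos) : prefix a y -> prefix b y -> prefix a b \/ prefix b a.
Proof.
  revert b y. induction a as [|i a IH]; intros b y Ha Hb.
  - left. now exists b.
  - destruct b as [|j b]; [right; now exists (i :: a)|].
    destruct Ha as [r1 ->], Hb as [r2 Hb]. injection Hb as -> Hb.
    destruct (IH b (a ++ r1) (prefix_app _ _) (ex_intro _ r2 Hb)) as [[r ->]|[r ->]].
    + left. now exists r.
    + right. now exists r.
Qed.

Definition sprefix (z y : pos) : Prop := prefix z y /\ z <> y.

Lemma sprefix_snoc (z y : pos) (i : nat) : sprefix z (y ++ [i]) -> z = y \/ sprefix z y.
Proof.
  intros [[r Hr] Hne]. destruct r as [|k r] using rev_ind.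
  - rewrite app_nil_r in Hr. subst. congruence.
  - rewrite app_assoc in Hr. apply app_inj_tail in Hr as [-> ->].
    destruct r as [|m r]; [left; now rewrite app_nil_r|].
    right. split; [now exists (m :: r)|]. intros E.
    apply (f_equal (@length nat)) in E. rewrite length_app in E. simpl in E. lia.
Qed.

Lemma snoc_neq_prefix (y z : pos) (i : nat) : prefix z y -> z <> y ++ [i].
Proof.
  intros Hz ->. apply prefix_length in Hz. rewrite length_app in Hz. simpl in Hz. lia.
Qed.

Lemma drop_prefix_app (p r : pos) : drop_prefix p (p ++ r) = r.
Proof. unfold drop_prefix. induction p; simpl; auto. Qed.

Lemma drop_prefix_eq (p q : pos) : prefix p q -> q = p ++ drop_prefix p q.
Proof. intros [r ->]. now rewrite drop_prefix_app. Qed.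

Lemma drop_prefix_app_r (p q d : pos) :
  prefix p q -> drop_prefix p (q ++ d) = drop_prefix p q ++ d.
Proof. intros [r ->]. now rewrite <- app_assoc, !drop_prefix_app. Qed.

Lemma prefix_closed_max (w : pos) (P : pos -> Prop) :
  P [] -> (forall p, P p -> prefix p w) -> (forall p p', P p -> prefix p' p -> P p') ->
  exists p, P p /\ forall p', P p' -> prefix p' p.
Proof.
  revert P. induction w as [|a w IH]; intros P H0 Hb Hc.
  - exists []. split; auto.
  - destruct (classic (P [a])) as [Ha|Ha].
    + destruct (IH (fun p => P (a :: p))) as (p & Hp & Hmax).
      * exact Ha.
      * intros p Hp. apply prefix_cons_inv with a. auto.
      * intros p p' Hp [r ->]. eapply Hc; [exact Hp|]. now exists r.
      * exists (a :: p). split; auto. intros [|b p'] Hp'; [now exists (a :: p)|].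
        destruct (Hb _ Hp') as [r E]. injection E as <- _.
        destruct (Hmax p' Hp') as [r' ->]. now exists r'.
    + exists []. split; auto. intros [|b p'] Hp'; [apply prefix_refl|].
      exfalso. destruct (Hb _ Hp') as [r E]. injection E as <- _.
      apply Ha. eapply Hc; [exact Hp'|]. now exists p'.
Qed.

Section Terms.
Context {F V : Type}.
Implicit Types (t u w l r : term F V) (p q d e : pos).

Lemma subterm_app t p q :
  subterm t (p ++ q) = match subterm t p with Some u => subterm u q | None => None end.
Proof.
  revert t. induction p as [|i p IH]; intros t; simpl; auto.
  destruct t as [x|f args]; auto. destruct i; auto.
  destruct (nth_error args i); auto.
Qed.

Lemma subterm_app_some t u p q : subterm t p = Some u -> subterm t (p ++ q) = subterm u q.
Proof. intros H. now rewrite subterm_app, H. Qed.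

Lemma subterm_subst (sigma : V -> term F V) l u d :
  subterm l d = Some u -> subterm (subst sigma l) d = Some (subst sigma u).
Proof.
  revert l. induction d as [|i d IH]; intros l H; simpl in *; [congruence|].
  destruct l as [x|f args]; [discriminate|]. destruct i; [discriminate|].
  simpl. rewrite nth_error_map. destruct (nth_error args i); [|discriminate].
  now apply IH.
Qed.

Lemma subterm_subst_inv (sigma : V -> term F V) p r w :
  subterm (subst sigma r) p = Some w ->
  (exists p1 p2 x, p = p1 ++ p2 /\ subterm r p1 = Some (Var x) /\ subterm (sigma x) p2 = Some w) \/
  (exists w0, subterm r p = Some w0 /\ w = subst sigma w0 /\ ~ is_var w0).
Proof.
  revert r. induction p as [|i p IH]; intros r H.
  - destruct r as [x|g rs]; simpl in H.
    + left. exists [], [], x. auto.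
    + right. exists (App g rs). injection H as <-. repeat split. intros [x E]; discriminate.
  - destruct r as [x|g rs]; [left; exists [], (i :: p), x; auto|].
    simpl in H. destruct i as [|j]; [discriminate|]. rewrite nth_error_map in H.
    destruct (nth_error rs j) as [rj|] eqn:E; [|discriminate]. simpl in H.
    destruct (IH rj H) as [(p1 & p2 & x & -> & H1 & H2)|(w0 & H1 & H2 & H3)].
    + left. exists (S j :: p1), p2, x. simpl. rewrite E. auto.
    + right. exists w0. simpl. rewrite E. auto.
Qed.

Lemma consistent_subst (sigma : V -> term F V) l : consistent l (subst sigma l).
Proof.
  intros p q x Hp Hq. now rewrite (subterm_subst sigma _ _ _ Hp), (subterm_subst sigma _ _ _ Hq).
Qed.

Lemma subterm_above_var l p e x :
  subterm l p = Some (Var x) -> sprefix e p -> exists f args, subterm l e = Some (App f args).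
Proof.
  intros H [[r ->] Hne]. rewrite subterm_app in H.
  destruct (subterm l e) as [v|]; [|discriminate].
  destruct r as [|i r]; [rewrite app_nil_r in Hne; congruence|].
  destruct v as [y|f args]; [discriminate|]. eauto.
Qed.

Lemma subterm_app_vars (f : F) (xs : list (term F V)) p u :
  Forall is_var xs -> subterm (App f xs) p = Some u -> ~ is_var u -> p = [].
Proof.
  intros Hx Hs Hnv. destruct p as [|i p]; auto. exfalso. simpl in Hs.
  destruct i as [|j]; [discriminate|]. destruct (nth_error xs j) as [y|] eqn:E; [|discriminate].
  apply nth_error_In in E. rewrite Forall_forall in Hx. destruct (Hx _ E) as [x ->].
  destruct p; simpl in Hs; [|discriminate]. injection Hs as <-. apply Hnv. now exists x.
Qed.

Lemma nth_error_upd {A} (g : A -> A) n (xs : list A) :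
  nth_error (upd_nth g n xs) n = option_map g (nth_error xs n).
Proof. revert n. induction xs as [|a xs IH]; intros [|n]; simpl; auto. Qed.

Lemma nth_error_upd_ne {A} (g : A -> A) n m (xs : list A) :
  n <> m -> nth_error (upd_nth g n xs) m = nth_error xs m.
Proof.
  revert n m. induction xs as [|a xs IH]; intros [|n] [|m] H; simpl; auto; try congruence.
  all: apply IH; congruence.
Qed.

Lemma length_upd {A} (g : A -> A) n (xs : list A) : length (upd_nth g n xs) = length xs.
Proof. revert n. induction xs; intros [|n]; simpl; auto. Qed.

Lemma subterm_replace_below t u w y e :
  subterm t y = Some u -> subterm (replace (y ++ e) t w) y = Some (replace e u w).
Proof.
  revert t. induction y as [|i y IH]; intros t H; simpl in *; [congruence|].
  destruct t as [x|f args]; [discriminate|]. destruct i as [|j]; [discriminate|].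
  simpl. rewrite PeanoNat.Nat.sub_0_r, nth_error_upd.
  destruct (nth_error args j); [|discriminate]. now apply IH.
Qed.

Lemma subterm_replace_disjoint t w p y :
  subterm t p <> None -> ~ prefix y p -> ~ prefix p y ->
  subterm (replace p t w) y = subterm t y.
Proof.
  revert t y. induction p as [|i p IH]; intros t y Hv H1 H2; [exfalso; apply H2; now exists y|].
  destruct y as [|j y]; [exfalso; apply H1; now exists (i :: p)|].
  simpl in Hv. destruct t as [x|f args]; [contradiction|].
  destruct i as [|i]; [contradiction|].
  simpl. rewrite PeanoNat.Nat.sub_0_r. destruct j as [|j]; auto.
  destruct (PeanoNat.Nat.eq_dec i j) as [->|Hne].
  - rewrite nth_error_upd. destruct (nth_error args j); [|contradiction]. simpl.
    apply IH; auto.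
    + intros [r Hr]. apply H1. exists r. simpl. congruence.
    + intros [r Hr]. apply H2. exists r. simpl. congruence.
  - now rewrite nth_error_upd_ne.
Qed.

Lemma replace_keeps_head t q w y f args :
  subterm t q <> None -> subterm t y = Some (App f args) -> ~ prefix q y ->
  exists args', subterm (replace q t w) y = Some (App f args').
Proof.
  intros Hv Hy Hq. destruct (classic (prefix y q)) as [[e ->]|Hyq].
  - rewrite (subterm_replace_below t _ w y e Hy).
    destruct e; [exfalso; apply Hq; rewrite app_nil_r; apply prefix_refl|]. simpl. eauto.
  - exists args. rewrite subterm_replace_disjoint; auto.
Qed.

(* The condition under which [rem] re-examines a non-linear match [l'@q] after a
   rewrite at [p]. *)
Definition var_repeated_above l' q p : Prop :=
  exists x q1 q2 q'', q1 <> q2 /\ subterm l' q1 = Some (Var x) /\ subterm l' q2 = Some (Var x) /\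
    subterm l' q'' = Some (Var x) /\ prefix (q ++ q'') p.

Lemma replace_keeps_inconsistent t w p l' u q :
  subterm t p <> None -> subterm t q = Some u -> ~ consistent l' u -> ~ is_var l' ->
  (forall d v, subterm l' d = Some v -> ~ is_var v -> ~ prefix p (q ++ d)) ->
  ~ var_repeated_above l' q p ->
  exists u', subterm (replace p t w) q = Some u' /\ ~ consistent l' u'.
Proof.
  intros Hv Hq Hnc Hnvl Hnb Hnr.
  assert (Hw : exists p1 p2 x, subterm l' p1 = Some (Var x) /\ subterm l' p2 = Some (Var x) /\
                 subterm u p1 <> subterm u p2).
  { apply NNPP. intros H. apply Hnc. intros p1 p2 x H1 H2. apply NNPP. intros H3. apply H. eauto 6. }
  destruct Hw as (p1 & p2 & x & H1 & H2 & H3).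
  assert (Hp12 : p1 <> p2) by (intros ->; auto).
  destruct (classic (prefix q p)) as [[e ->]|Hqp].
  - assert (Hdisj : forall pi, subterm l' pi = Some (Var x) -> ~ prefix pi e /\ ~ prefix e pi).
    { intros pi Hpi. split.
      - intros He. apply Hnr. exists x, p1, p2, pi. repeat split; auto. now apply prefix_app_l.
      - intros He. destruct (list_eq_dec PeanoNat.Nat.eq_dec e pi) as [<-|Ene].
        + apply Hnr. exists x, p1, p2, e. repeat split; auto. apply prefix_refl.
        + destruct (subterm_above_var l' pi e x Hpi (conj He Ene)) as (f & args & Hs).
          eapply Hnb; [exact Hs| |apply prefix_refl]. intros [y Hy]; discriminate. }
    exists (replace e u w). split; [now apply subterm_replace_below|].
    assert (Hve : subterm u e <> None) by now rewrite <- (subterm_app_some _ _ _ _ Hq).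
    intros Hc. apply H3.
    rewrite <- (subterm_replace_disjoint u w e p1 Hve (proj1 (Hdisj _ H1)) (proj2 (Hdisj _ H1))).
    rewrite <- (subterm_replace_disjoint u w e p2 Hve (proj1 (Hdisj _ H2)) (proj2 (Hdisj _ H2))).
    eapply Hc; eauto.
  - destruct (classic (prefix p q)) as [Hpq|Hpq].
    + exfalso. apply (Hnb [] l'); auto. now rewrite app_nil_r.
    + exists u. split; auto. now rewrite subterm_replace_disjoint.
Qed.

Variable ar : F -> nat.

Lemma wf_subterm t u p : wf ar t -> subterm t p = Some u -> wf ar u.
Proof.
  intros Hw Hs q f args Hq. apply (Hw (p ++ q)). now rewrite (subterm_app_some _ _ _ _ Hs).
Qed.

Lemma wf_subst (sigma : V -> term F V) r :
  wf ar r -> (forall x, occurs x r -> wf ar (sigma x)) -> wf ar (subst sigma r).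
Proof.
  intros Hr Hs p f args Hp.
  destruct (subterm_subst_inv sigma p r _ Hp) as [(p1 & p2 & x & -> & H1 & H2)|(w0 & H1 & H2 & H3)].
  - exact (Hs x (ex_intro _ p1 H1) p2 f args H2).
  - destruct w0 as [x|g rs]; [exfalso; apply H3; now exists x|].
    injection H2 as -> ->. rewrite length_map. exact (Hr _ _ _ H1).
Qed.

Lemma wf_replace t u p : wf ar t -> wf ar u -> subterm t p <> None -> wf ar (replace p t u).
Proof.
  intros Ht Hu Hv y f args Hy.
  destruct (classic (prefix p y)) as [[e ->]|H1].
  - destruct (subterm t p) as [v|] eqn:Ev; [|congruence].
    pose proof (subterm_replace_below t v u p [] Ev) as E. rewrite app_nil_r in E.
    rewrite (subterm_app_some _ _ _ _ E) in Hy. exact (Hu _ _ _ Hy).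
  - destruct (classic (prefix y p)) as [[e ->]|H2].
    + destruct (subterm t y) as [v|] eqn:Ev; [|exfalso; apply Hv; now rewrite subterm_app, Ev].
      rewrite (subterm_replace_below t v u y e Ev) in Hy.
      destruct e as [|i e]; [exfalso; apply H1; rewrite app_nil_r; apply prefix_refl|].
      destruct v as [x|g vs]; [discriminate|].
      injection Hy as -> <-. rewrite length_upd. exact (Ht _ _ _ Ev).
    + rewrite subterm_replace_disjoint in Hy; auto. exact (Ht _ _ _ Hy).
Qed.

Lemma wf_rewrite (R : list rule) t l r p sigma :
  isTRS ar R -> In (l, r) R -> wf ar t -> subterm t p = Some (subst sigma l) ->
  wf ar (replace p t (subst sigma r)).
Proof.
  intros [_ HR] Hin Ht Hs. destruct (HR _ _ Hin) as (_ & Hocc & _ & Hwr).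
  apply wf_replace; auto; [|rewrite Hs; discriminate].
  apply wf_subst; auto. intros x Hx. destruct (Hocc x Hx) as [q Hq].
  apply (wf_subterm (subst sigma l) (sigma x) q); [exact (wf_subterm _ _ _ Ht Hs)|].
  exact (subterm_subst sigma _ _ _ Hq).
Qed.

End Terms.

Lemma Forall2_in_r {A B} (P : A -> B -> Prop) xs ys y :
  Forall2 P xs ys -> In y ys -> exists x, In x xs /\ P x y.
Proof.
  induction 1 as [|x y' xs ys Hp _ IH]; intros Hy; [destruct Hy|].
  destruct Hy as [<-|Hy]; [exists x; split; auto; now left|].
  destruct (IH Hy) as (x' & H1 & H2). exists x'. split; auto. now right.
Qed.

Lemma Forall2_in_l {A B} (P : A -> B -> Prop) xs ys x :
  Forall2 P xs ys -> In x xs -> exists y, In y ys /\ P x y.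
Proof.
  induction 1 as [|x' y xs ys Hp _ IH]; intros Hx; [destruct Hx|].
  destruct Hx as [<-|Hx]; [exists y; split; auto; now left|].
  destruct (IH Hx) as (y' & H1 & H2). exists y'. split; auto. now right.
Qed.

Lemma Forall2_map_eq {A B C} (P : A -> B -> Prop) (f : A -> C) (g : B -> C) xs ys :
  Forall2 P xs ys -> (forall x y, P x y -> f x = g y) -> map f xs = map g ys.
Proof. induction 1; intros Hf; simpl; auto. f_equal; auto. Qed.

Lemma Forall2_functional {A B} (P : A -> B -> Prop) xs ys1 ys2 :
  (forall x, In x xs -> forall y1 y2, P x y1 -> P x y2 -> y1 = y2) ->
  Forall2 P xs ys1 -> Forall2 P xs ys2 -> ys1 = ys2.
Proof.
  intros Hf H1. revert ys2. induction H1 as [|x y1 xs ys1 Hp _ IH]; intros ys2 H2;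
    inversion H2; subst; auto.
  f_equal; [eapply Hf; eauto; now left|]. apply IH; auto. intros x' Hx'. apply Hf. now right.
Qed.

Section Trees.
Context {F V : Type} (L : state F V -> pos).
Implicit Types (s : state F V) (kids cs : list (@ctree F V)) (c ct X Y Z k : @ctree F V)
  (A : list pos) (sq cf : state F V * pos).

Definition ctree_nested_ind (P : @ctree F V -> Prop)
  (Hb : forall s p, P (Bud s p))
  (Hn : forall s p kids, (forall k, In k kids -> P k) -> P (Node s p kids)) :
  forall ct, P ct :=
  fix rec ct :=
    match ct with
    | Bud s p => Hb s p
    | Node s p kids => Hn s p kids
        ((fix aux (l : list ctree) : forall k, In k l -> P k :=
            match l with
            | [] => fun k H => False_ind _ H
            | k0 :: l' => fun k H =>
                match H with
                | or_introl e => eq_ind k0 P (rec k0) k e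
                | or_intror H' => aux l' k H'
                end
            end) kids)
    end.

Definition cfg_ipos cf : pos := snd cf ++ L (fst cf).
Definition ipos ct : pos := cfg_ipos (root_cfg ct).
Definition is_node ct : Prop := exists s p kids, ct = Node s p kids.

(* [desc A X ct]: [X] is a subtree of [ct], and [A] lists the inspected positions
   of the nodes strictly above [X], innermost first. *)
Inductive desc : list pos -> @ctree F V -> @ctree F V -> Prop :=
| desc_refl c : desc [] c c
| desc_kid A X s p kids k : In k kids -> desc A X k -> desc (A ++ [p ++ L s]) X (Node s p kids).

Lemma desc_trans A1 Z ct A2 X : desc A1 Z ct -> desc A2 X Z -> desc (A2 ++ A1) X ct.
Proof.
  induction 1 as [c|A Y s p kids k Hk Ho IH]; intros H; [now rewrite app_nil_r|].
  rewrite app_assoc. econstructor; eauto.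
Qed.

Lemma subtree_desc c ct : Subtree c ct -> exists A, desc A c ct.
Proof.
  induction 1 as [c|c s p kids k Hk _ [A IH]]; [exists []; constructor|].
  eexists. econstructor; eauto.
Qed.

Lemma desc_root_or_below A Y c : desc A Y c -> (A = [] /\ Y = c) \/ In (ipos c) A.
Proof.
  destruct 1; [now left|]. right. apply in_or_app. right. now left.
Qed.

Lemma innode_desc sq ct : InNode sq ct -> exists A X, desc A X ct /\ is_node X /\ root_cfg X = sq.
Proof.
  induction 1 as [s p kids|c s p kids k Hk _ (A & X & Ho & Hn & Hr)].
  - exists [], (Node s p kids). repeat split; [constructor|]. do 3 eexists; reflexivity.
  - exists (A ++ [p ++ L s]), X. split; auto. econstructor; eauto.
Qed.

Lemma desc_innode A X ct : desc A X ct -> is_node X -> InNode (root_cfg X) ct.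
Proof.
  induction 1 as [c|A X s p kids k Hk Ho IH]; intros Hn.
  - destruct Hn as (s & p & kids & ->). constructor.
  - econstructor; eauto.
Qed.

Lemma innode_desc_trans A Z ct sq : desc A Z ct -> InNode sq Z -> InNode sq ct.
Proof.
  intros Ho Hi. destruct (innode_desc _ _ Hi) as (A2 & X & Ho2 & Hn & <-).
  exact (desc_innode _ _ _ (desc_trans _ _ _ _ _ Ho Ho2) Hn).
Qed.

Lemma inbud_desc sq ct : InBud sq ct -> exists A s p, desc A (Bud s p) ct /\ sq = (s, p).
Proof.
  induction 1 as [s p|sq s p kids k Hk _ (A & s' & p' & Ho & ->)].
  - exists [], s, p. split; [constructor|reflexivity].
  - eexists _, s', p'. split; [econstructor; eauto|reflexivity].
Qed.

Lemma desc_no_bud A X ct : desc A X ct -> (forall sq, ~ InBud sq ct) -> forall sq, ~ InBud sq X.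
Proof.
  induction 1 as [c|A X s p kids k Hk Ho IH]; intros Hn sq Hb; [exact (Hn sq Hb)|].
  apply (IH (fun sq' Hb' => Hn sq' ltac:(econstructor; eauto)) sq Hb).
Qed.

Lemma desc_split A X ct y : desc A X ct -> In y A ->
  exists A1 A2 Z, desc A1 Z ct /\ desc A2 X Z /\ ipos Z = y /\ is_node Z.
Proof.
  induction 1 as [c|A X s p kids k Hk Ho IH]; intros Hy; [destruct Hy|].
  apply in_app_or in Hy as [Hy|[<-|[]]].
  - destruct (IH Hy) as (A1 & A2 & Z & H1 & H2 & Hi & Hn).
    exists (A1 ++ [p ++ L s]), A2, Z. split; [econstructor; eauto|auto].
  - exists [], (A ++ [p ++ L s]), (Node s p kids).
    repeat split; [constructor|econstructor; eauto|]. do 3 eexists; reflexivity.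
Qed.

Lemma grow_root s p kids a b : GrowR s p kids a b -> root_cfg a = root_cfg b.
Proof. destruct 1; reflexivity. Qed.

Lemma grow_functional s p kids a b1 b2 : GrowR s p kids a b1 -> GrowR s p kids a b2 -> b1 = b2.
Proof.
  revert b1 b2. induction a as [s' p'|s' p' cs IH] using ctree_nested_ind; intros b1 b2 H1 H2.
  - inversion H1; subst; inversion H2; subst; congruence.
  - inversion H1; subst. inversion H2; subst. f_equal. eapply Forall2_functional; eauto.
Qed.

Lemma grow_desc s p kids a b A X : GrowR s p kids a b -> desc A X a ->
  exists X', desc A X' b /\ GrowR s p kids X X'.
Proof.
  intros Hg Ho. revert b Hg. induction Ho as [c|A X s' p' cs k Hk Ho IH]; intros b Hg.
  - exists b. split; [constructor|auto].
  - inversion Hg as [| |? ? cs' ? HF]; subst.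
    destruct (Forall2_in_l _ _ _ _ HF Hk) as (k' & Hk' & Hg').
    destruct (IH _ Hg') as (X' & Ho' & HX). exists X'. split; auto. econstructor; eauto.
Qed.

Lemma grow_innode s p kids a b sq : GrowR s p kids a b -> InNode sq a -> InNode sq b.
Proof.
  intros Hg Hi. destruct (innode_desc _ _ Hi) as (A & X & Ho & (s1 & p1 & k1 & ->) & <-).
  destruct (grow_desc _ _ _ _ _ _ _ Hg Ho) as (X' & Ho' & HgX).
  inversion HgX; subst. apply (desc_innode A _ _ Ho'). do 3 eexists; reflexivity.
Qed.

Lemma grow_bud_innode s p kids a b : GrowR s p kids a b -> InBud (s, p) a -> InNode (s, p) b.
Proof.
  intros Hg Hi. destruct (inbud_desc _ _ Hi) as (A & s1 & p1 & Ho & E). injection E as <- <-.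
  destruct (grow_desc _ _ _ _ _ _ _ Hg Ho) as (X' & Ho' & HgX).
  inversion HgX; subst; [|congruence].
  apply (desc_innode A _ _ Ho'). do 3 eexists; reflexivity.
Qed.

Lemma grow_innode_inv s p kids sq a b : GrowR s p kids a b ->
  (forall sq' k, In k kids -> ~ InNode sq' k) -> InNode sq b -> InNode sq a \/ sq = (s, p).
Proof.
  revert b. induction a as [s' p'|s' p' cs IH] using ctree_nested_ind; intros b Hg Hk Hi.
  - inversion Hg; subst; inversion Hi; subst; auto. exfalso. eapply Hk; eauto.
  - inversion Hg as [| |? ? ? cs' HF]; subst. inversion Hi as [|? ? ? ? k' Hk' Hi']; subst.
    + left. constructor.
    + destruct (Forall2_in_r _ _ _ _ HF Hk') as (k0 & Hk0 & Hg0).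
      destruct (IH k0 Hk0 _ Hg0 Hk Hi') as [H|H]; auto. left. econstructor; eauto.
Qed.

Lemma prune_root c q : root_cfg (prune L c q) = root_cfg c.
Proof.
  destruct c as [s p|s p kids]; simpl; auto.
  destruct (list_eq_dec PeanoNat.Nat.eq_dec (p ++ L s) q); reflexivity.
Qed.

Lemma prune_node s p kids q :
  p ++ L s <> q -> prune L (Node s p kids) q = Node s p (map (fun c => prune L c q) kids).
Proof. intros H. simpl. destruct (list_eq_dec PeanoNat.Nat.eq_dec (p ++ L s) q); congruence. Qed.

Lemma prune_node_here s p kids : prune L (Node s p kids) (p ++ L s) = Bud s p.
Proof. simpl. destruct (list_eq_dec PeanoNat.Nat.eq_dec (p ++ L s) (p ++ L s)); congruence. Qed.

Lemma prune_is_node X q : is_node (prune L X q) <-> is_node X /\ ipos X <> q.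
Proof.
  split.
  - intros (s & p & kids & E). destruct X as [s' p'|s' p' cs]; simpl in E; [discriminate|].
    destruct (list_eq_dec PeanoNat.Nat.eq_dec (p' ++ L s') q) as [e|e]; [discriminate|].
    split; [do 3 eexists; reflexivity|exact e].
  - intros [(s & p & kids & ->) H]. rewrite prune_node by exact H. do 3 eexists; reflexivity.
Qed.

Lemma prune_desc A X ct q : desc A X ct -> ~ In q A -> desc A (prune L X q) (prune L ct q).
Proof.
  induction 1 as [c|A X s p kids k Hk Ho IH]; intros Hq; [constructor|].
  rewrite prune_node.
  - econstructor; [apply in_map; exact Hk|]. apply IH. intros H. apply Hq. apply in_or_app. now left.
  - intros E. apply Hq. apply in_or_app. right. now left.
Qed.

Lemma prune_desc_inv q ct A X' : desc A X' (prune L ct q) ->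
  exists X, desc A X ct /\ X' = prune L X q /\ ~ In q A.
Proof.
  revert A X'. induction ct as [s p|s p kids IH] using ctree_nested_ind; intros A X' Ho.
  - inversion Ho; subst. exists (Bud s p). repeat split; [constructor|auto].
  - destruct (list_eq_dec PeanoNat.Nat.eq_dec (p ++ L s) q) as [<-|e].
    + rewrite prune_node_here in Ho. inversion Ho; subst.
      exists (Node s p kids). repeat split; [constructor|now rewrite prune_node_here|auto].
    + rewrite prune_node in Ho by auto. inversion Ho as [|A0 ? ? ? ? k Hk Ho']; subst.
      * exists (Node s p kids). repeat split; [constructor|now rewrite prune_node|auto].
      * apply in_map_iff in Hk as (k0 & <- & Hk0).
        destruct (IH k0 Hk0 _ _ Ho') as (X & HoX & -> & Hn).
        exists X. repeat split; [econstructor; eauto|].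
        intros H. apply in_app_or in H as [H|[H|[]]]; auto.
Qed.

Lemma prune_innode_inv ct p sq : InNode sq (prune L ct p) ->
  exists A X, desc A X ct /\ is_node X /\ root_cfg X = sq /\ ~ In p A /\ ipos X <> p.
Proof.
  intros H. destruct (innode_desc _ _ H) as (A & X' & Ho & Hn & Hr).
  destruct (prune_desc_inv p ct A X' Ho) as (X & HoX & -> & Hp).
  destruct (proj1 (prune_is_node X p) Hn) as [HnX Hne].
  exists A, X. rewrite prune_root in Hr. auto.
Qed.

Lemma prune_innode ct p A X : desc A X ct -> is_node X -> ~ In p A -> ipos X <> p ->
  InNode (root_cfg X) (prune L ct p).
Proof.
  intros Ho Hn Hp Hne. rewrite <- (prune_root X p).
  apply (desc_innode A); [now apply prune_desc|]. now apply prune_is_node.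
Qed.

End Trees.

Lemma clos_rt_sym {T} (rel : T -> T -> Prop) : (forall x y, rel x y -> rel y x) ->
  forall x y, clos_refl_trans T rel x y -> clos_refl_trans T rel y x.
Proof. intros Hs x y H. induction H; eauto using rt_step, rt_refl, rt_trans. Qed.

Lemma gcp_exists {F V} (K : state F V) : (exists g, K g) -> exists p, is_gcp K p.
Proof.
  intros [g0 Hg0].
  destruct (prefix_closed_max (snd (gann g0)) (fun p => forall g, K g -> prefix p (snd (gann g))))
    as (p & Hp & Hm).
  - intros g _. now exists (snd (gann g)).
  - intros p Hp. exact (Hp _ Hg0).
  - intros p p' Hp Hpp g Hg. eapply prefix_trans; eauto.
  - exists p. split; auto.
Qed.

Lemma gcp_unique {F V} (K : state F V) p1 p2 : is_gcp K p1 -> is_gcp K p2 -> p1 = p2.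
Proof.
  intros H1 H2. apply prefix_antisym; [apply (proj2 H2), (proj1 H1)|apply (proj2 H1), (proj1 H2)].
Qed.

Lemma dep_class_sub {F V} (D K : state F V) g : dep_class D K -> K g -> D g.
Proof. intros [g0 [_ HK]] H. apply HK in H. tauto. Qed.

Lemma dep_class_eq {F V} (D K1 K2 : state F V) g1 g2 :
  dep_class D K1 -> dep_class D K2 -> K1 g1 -> K2 g2 -> ddep g1 g2 -> K1 = K2.
Proof.
  intros [b1 [Hb1 H1]] [b2 [Hb2 H2]] Hg1 Hg2 Hdd.
  set (rel := fun x y : goal F V => D x /\ D y /\ ddep x y).
  assert (Hsym : forall x y, rel x y -> rel y x).
  { intros x y (Ha & Hb & p & Hp1 & Hp2). repeat split; auto. exists p. auto. }
  apply H1 in Hg1 as [Dg1 R1]. apply H2 in Hg2 as [Dg2 R2].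
  assert (R12 : clos_refl_trans _ rel b1 b2).
  { eapply rt_trans; [exact R1|]. eapply rt_trans; [apply rt_step; exact (conj Dg1 (conj Dg2 Hdd))|].
    now apply clos_rt_sym. }
  apply functional_extensionality. intros g. apply propositional_extensionality.
  rewrite H1, H2. split; intros [Dg Rg]; split; auto.
  - eapply rt_trans; [|exact Rg]. now apply clos_rt_sym.
  - eapply rt_trans; [exact R12|exact Rg].
Qed.

Section Automaton.
Context {F V : Type} (ar : F -> nat) (R : list (@rule F V)) (L : state F V -> pos).
Hypothesis HR : isTRS ar R.
Hypothesis HL : valid_labelling ar R L.
Implicit Types (s K : state F V) (g : goal F V).

Notation deriv := (deriv ar R L).
Notation delta := (delta ar R L).
Notation reachable := (reachable ar R L).

Definition goal_wf g : Prop :=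
  In (fst (gann g)) (lhs R) /\ (exists e, gobl g e) /\
  forall l' r, gobl g (l', r) ->
    exists d, r = snd (gann g) ++ d /\ subterm (fst (gann g)) d = Some l' /\ ~ is_var l'.

Definition obl_antichain s : Prop :=
  forall g1 g2 r1 r2, s g1 -> s g2 -> obl_pos (gobl g1) r1 -> obl_pos (gobl g2) r2 ->
    prefix r1 r2 -> r1 = r2.

Definition state_wf s : Prop := (forall g, s g -> goal_wf g) /\ obl_antichain s.

Lemma lhs_wf l : In l (lhs R) -> wf ar l /\ ~ is_var l.
Proof.
  intros H. apply in_map_iff in H as [[l0 r] [<- Hin]].
  destruct HR as [_ H]. destruct (H _ _ Hin) as (H1 & _ & H3 & _). auto.
Qed.

Lemma in_lhs l r : In (l, r) R -> In l (lhs R).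
Proof. exact (in_map fst R (l, r)). Qed.

Lemma lhs_nonempty : exists l, In l (lhs R).
Proof.
  destruct HR as [HRne _]. destruct R as [|[l r] R']; [congruence|]. exists l. now left.
Qed.

Lemma s0_wf : state_wf (s0 R).
Proof.
  split.
  - intros g [l [Hl ->]]. repeat split; [exact Hl|eexists; reflexivity|].
    intros l' r H. injection H as -> ->. exists []. repeat split; auto. apply (lhs_wf l Hl).
  - intros g1 g2 r1 r2 [l1 [_ ->]] [l2 [_ ->]] [x1 H1] [x2 H2] _.
    injection H1 as _ ->. now injection H2 as _ ->.
Qed.

Lemma deriv_obl_pos s f g r : deriv s f g -> obl_pos (gobl g) r ->
  (exists g0, s g0 /\ obl_pos (gobl g0) r /\ r <> L s) \/ exists i, r = L s ++ [i].
Proof.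
  intros [(mo & ma & Hs & _ & _ & ->)|[[Hs Hn]|(l & i & _ & _ & ->)]] [l' Hr]; simpl in *.
  - destruct Hr as [[Hm Hne]|(l0 & i & u & _ & _ & _ & _ & He)].
    + left. exists (Goal mo ma). repeat split; auto. now exists l'.
    + right. exists i. now injection He as _ ->.
  - left. exists g. repeat split; auto; [now exists l'|]. intros ->. apply Hn. now exists l'.
  - right. exists i. now injection Hr as _ ->.
Qed.

Lemma deriv_wf s f : state_wf s -> (exists g, s g /\ obl_pos (gobl g) (L s)) ->
  state_wf (deriv s f).
Proof.
  intros [Hg Ha] [gL [HgL HoL]]. split.
  - intros g [(mo & ma & Hs & _ & Hne & ->)|[[Hs Hn]|(l & i & Hl & _ & ->)]].
    + destruct (Hg _ Hs) as (Hin & _ & Hob). simpl in *. repeat split; [exact Hin|exact Hne|].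
      intros l' r [[Hm _]|(l0 & i & u & Hm & _ & Hu & Hnv & He)]; [exact (Hob _ _ Hm)|].
      injection He as -> ->. destruct (Hob _ _ Hm) as (d & Hd & Hsub & _).
      exists (d ++ [i]). rewrite Hd, app_assoc. repeat split; auto.
      now rewrite (subterm_app_some _ _ _ _ Hsub).
    + exact (Hg _ Hs).
    + repeat split; [exact Hl|eexists; reflexivity|]. intros l' r H. injection H as -> ->.
      exists []. rewrite app_nil_r. repeat split; auto. apply (lhs_wf l Hl).
  - intros g1 g2 r1 r2 H1 H2 Ho1 Ho2 Hp.
    destruct (deriv_obl_pos _ _ _ _ H1 Ho1) as [(g1' & Hs1 & Ho1' & Hne1)|[i ->]];
    destruct (deriv_obl_pos _ _ _ _ H2 Ho2) as [(g2' & Hs2 & Ho2' & Hne2)|[j ->]].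
    + exact (Ha _ _ _ _ Hs1 Hs2 Ho1' Ho2' Hp).
    + destruct (list_eq_dec PeanoNat.Nat.eq_dec r1 (L s ++ [j])) as [E|E]; [exact E|].
      destruct (sprefix_snoc r1 (L s) j (conj Hp E)) as [->|[Hp' _]]; [congruence|].
      exfalso. apply Hne1. exact (Ha _ _ _ _ Hs1 HgL Ho1' HoL Hp').
    + exfalso. apply Hne2. symmetry. apply (Ha _ _ _ _ HgL Hs2 HoL Ho2').
      eapply prefix_trans; [apply prefix_app|exact Hp].
    + apply prefix_length_eq; auto. now rewrite !length_app.
Qed.

Lemma state_wf_sub s K : state_wf s -> (forall g, K g -> s g) -> state_wf K.
Proof. intros [Hg Ha] Hs. split; [auto|]. intros g1 g2 r1 r2 H1 H2. apply Ha; auto. Qed.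

Lemma gcp_prefix_obl K p g l r : state_wf K -> is_gcp K p -> K g -> gobl g (l, r) -> prefix p r.
Proof.
  intros [Hg _] [Hp _] HK Ho. destruct (Hg _ HK) as (_ & _ & Hob).
  destruct (Hob _ _ Ho) as (d & -> & _). eapply prefix_trans; [exact (Hp _ HK)|apply prefix_app].
Qed.

Lemma lift_wf K p : state_wf K -> is_gcp K p -> state_wf (lift p K).
Proof.
  intros HG Hgcp. split.
  - intros g [g0 [HK ->]]. destruct (proj1 HG _ HK) as (Hin & [[e1 e2] He] & Hob).
    repeat split; [exact Hin|exists (e1, drop_prefix p e2); simpl; eauto|].
    intros l' r (l1 & q1 & Ho & E). injection E as -> ->.
    destruct (Hob _ _ Ho) as (d & -> & Hsub & Hnv). exists d. repeat split; auto.
    apply drop_prefix_app_r. apply (proj1 Hgcp _ HK).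
  - intros g1 g2 r1 r2 [g1' [H1 ->]] [g2' [H2 ->]] [l1 (a1 & b1 & Ho1 & E1)]
      [l2 (a2 & b2 & Ho2 & E2)] Hp.
    injection E1 as -> ->. injection E2 as -> ->.
    destruct (gcp_prefix_obl _ _ _ _ _ HG Hgcp H1 Ho1) as [c1 ->].
    destruct (gcp_prefix_obl _ _ _ _ _ HG Hgcp H2 Ho2) as [c2 ->].
    rewrite !drop_prefix_app in *.
    assert (E : p ++ c1 = p ++ c2).
    { apply (proj2 HG _ _ _ _ H1 H2 (ex_intro _ a1 Ho1) (ex_intro _ a2 Ho2)).
      now apply prefix_app_l. }
    now apply app_inv_head in E.
Qed.

Lemma label_obl s : reachable s -> exists g, s g /\ obl_pos (gobl g) (L s).
Proof. intros Hr. destruct (HL _ Hr) as (mo & l & Hs & Ho). exists (Goal mo (l, [])). auto. Qed.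

Lemma label_s0 : L (s0 R) = [].
Proof.
  destruct (HL _ (reach0 ar R L)) as (mo & l & [l0 [_ E]] & [l' Ho]).
  injection E as -> _. now injection Ho as _ E.
Qed.

Lemma reachable_wf s : reachable s -> state_wf s.
Proof.
  induction 1 as [|s f s' p' Hr IH Hd]; [apply s0_wf|].
  destruct Hd as (K & Hc & Hg & E). simpl in *. subst s'.
  apply lift_wf; auto. apply state_wf_sub with (s := deriv s f).
  - apply deriv_wf; auto. now apply label_obl.
  - intros g. now apply dep_class_sub.
Qed.

Lemma deriv_reachable_wf s f : reachable s -> state_wf (deriv s f).
Proof. intros Hr. apply deriv_wf; [now apply reachable_wf|now apply label_obl]. Qed.

Lemma dep_class_wf s f K : reachable s -> dep_class (deriv s f) K -> state_wf K.
Proof.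
  intros Hr HK. apply (state_wf_sub (deriv s f)); [now apply deriv_reachable_wf|].
  intros g. now apply dep_class_sub.
Qed.

(** * The configuration-tree invariant *)

Implicit Types (kids cs : list (@ctree F V)) (a b c ct X Y Z k : @ctree F V)
  (A anc : list pos) (sq cf : state F V * pos) (t : term F V).

Notation desc := (desc L).
Notation ipos := (ipos L).
Notation cfg_ipos := (cfg_ipos L).

Definition cfg_obl cf (y : pos) : Prop :=
  exists g r, fst cf g /\ obl_pos (gobl g) r /\ y = snd cf ++ r.

Definition cfg_region cf (y : pos) : Prop := exists y0, cfg_obl cf y0 /\ prefix y0 y.

(* [anc] lists the positions inspected by the ancestors of [cf]. *)
Definition cfg_covered anc cf : Prop :=
  forall g l q', fst cf g -> gann g = (l, q') ->
    forall d u, subterm l d = Some u -> ~ is_var u ->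
      In (snd cf ++ q' ++ d) anc \/ exists l' e, gobl g (l', q' ++ e) /\ prefix e d.

Definition cfg_inv anc cf : Prop :=
  reachable (fst cf) /\
  (forall y z, cfg_obl cf y -> sprefix z y -> In z anc) /\
  (forall y, cfg_obl cf y -> ~ In y anc) /\
  (forall y z, In y anc -> sprefix z y -> In z anc) /\
  cfg_covered anc cf.

Inductive tree_inv t : list pos -> @ctree F V -> Prop :=
| tree_inv_bud anc s p : cfg_inv anc (s, p) -> tree_inv t anc (Bud s p)
| tree_inv_node anc s p kids f args :
    cfg_inv anc (s, p) ->
    subterm t (p ++ L s) = Some (App f args) ->
    (forall cf, In cf (map root_cfg kids) <->
       exists s' p', delta s f (s', p') /\ cf = (s', p ++ p')) ->
    (forall k, In k kids -> tree_inv t ((p ++ L s) :: anc) k) ->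
    (forall k y, In k kids -> cfg_region (root_cfg k) y -> cfg_region (s, p) y /\ y <> p ++ L s) ->
    (forall k1 k2, In k1 kids -> In k2 kids -> root_cfg k1 = root_cfg k2 -> k1 = k2) ->
    (forall k1 k2 y, In k1 kids -> In k2 kids -> root_cfg k1 <> root_cfg k2 ->
       cfg_region (root_cfg k1) y -> cfg_region (root_cfg k2) y -> False) ->
    tree_inv t anc (Node s p kids).

Lemma tree_inv_cfg t anc ct : tree_inv t anc ct -> cfg_inv anc (root_cfg ct).
Proof. destruct 1; auto. Qed.

Lemma tree_inv_kid t anc s p kids k :
  tree_inv t anc (Node s p kids) -> In k kids -> tree_inv t ((p ++ L s) :: anc) k.
Proof. intros HT Hk. inversion HT; subst. auto. Qed.

Lemma cfg_obl_ipos anc cf : cfg_inv anc cf -> cfg_obl cf (cfg_ipos cf).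
Proof.
  intros [Hr _]. destruct (HL _ Hr) as (mo & l & Hs & Ho).
  exists (Goal mo (l, [])), (L (fst cf)). auto.
Qed.

Lemma cfg_obl_region cf y : cfg_obl cf y -> cfg_region cf y.
Proof. intros H. exists y. split; auto. apply prefix_refl. Qed.

Lemma tree_inv_desc t anc ct A X : tree_inv t anc ct -> desc A X ct -> tree_inv t (A ++ anc) X.
Proof.
  intros HT Ho. revert anc HT. induction Ho as [c|A X s p kids k Hk Ho IH]; intros anc HT; auto.
  rewrite <- app_assoc. apply IH. eapply tree_inv_kid; eauto.
Qed.

Lemma desc_region t anc k A X : tree_inv t anc k -> desc A X k ->
  cfg_region (root_cfg k) (ipos X) /\ forall y, In y A -> cfg_region (root_cfg k) y.
Proof.
  intros HT Ho. revert anc HT. induction Ho as [c|A X s p kids k Hk Ho IH]; intros anc HT.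
  - split; [|intros y []]. apply cfg_obl_region. eapply cfg_obl_ipos, tree_inv_cfg; eauto.
  - inversion HT as [|? ? ? ? ? ? Hc _ _ HTk Hsub]; subst.
    destruct (IH _ (HTk _ Hk)) as [G1 G2]. split; [exact (proj1 (Hsub _ _ Hk G1))|].
    intros y Hy. apply in_app_or in Hy as [Hy|[<-|[]]].
    + exact (proj1 (Hsub _ _ Hk (G2 _ Hy))).
    + apply cfg_obl_region. exact (cfg_obl_ipos anc (s, p) Hc).
Qed.

(* Distinct nodes inspect distinct positions, so a node is determined by its
   inspected position. *)
Lemma desc_unique t anc ct A1 X1 A2 X2 : tree_inv t anc ct ->
  desc A1 X1 ct -> desc A2 X2 ct ->
  (In (ipos X1) A2 \/ ipos X1 = ipos X2) -> (In (ipos X2) A1 \/ ipos X2 = ipos X1) ->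
  X1 = X2 /\ A1 = A2.
Proof.
  intros HT. revert A1 X1 A2 X2.
  induction HT as [anc s p Hc|anc s p kids f args Hc Hsub Hkids HTk IH Hsubk Heqk Hdisj];
    intros A1 X1 A2 X2 Ho1 Ho2 H1 H2.
  - inversion Ho1; subst. inversion Ho2; subst. auto.
  - inversion Ho1 as [c1|A1' X1' s1 p1 kids1 k1 Hk1 Ho1']; subst;
    inversion Ho2 as [c2|A2' X2' s2 p2 kids2 k2 Hk2 Ho2']; subst; auto.
    + exfalso. destruct (desc_region _ _ _ _ _ (HTk _ Hk2) Ho2') as [Ho _].
      destruct H2 as [[]|H2]. apply (proj2 (Hsubk _ _ Hk2 Ho)). now rewrite H2.
    + exfalso. destruct (desc_region _ _ _ _ _ (HTk _ Hk1) Ho1') as [Ho _].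
      destruct H1 as [[]|H1]. apply (proj2 (Hsubk _ _ Hk1 Ho)). now rewrite H1.
    + destruct (desc_region _ _ _ _ _ (HTk _ Hk1) Ho1') as [O1 O1A].
      destruct (desc_region _ _ _ _ _ (HTk _ Hk2) Ho2') as [O2 O2A].
      assert (H1' : In (ipos X1) A2' \/ ipos X1 = ipos X2).
      { destruct H1 as [H1|H1]; auto. apply in_app_or in H1 as [H1|[H1|[]]]; auto.
        exfalso. apply (proj2 (Hsubk _ _ Hk1 O1)). auto. }
      assert (H2' : In (ipos X2) A1' \/ ipos X2 = ipos X1).
      { destruct H2 as [H2|H2]; auto. apply in_app_or in H2 as [H2|[H2|[]]]; auto.
        exfalso. apply (proj2 (Hsubk _ _ Hk2 O2)). auto. }
      assert (Hk : k1 = k2).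
      { apply Heqk; auto. apply NNPP. intros E.
        apply (Hdisj k1 k2 (ipos X1) Hk1 Hk2 E O1).
        destruct H1' as [H|H]; [now apply O2A|rewrite H; exact O2]. }
      subst k2. destruct (IH _ Hk1 _ _ _ _ Ho1' Ho2' H1' H2') as [-> ->]. auto.
Qed.

Lemma lift_obl K p p' y : state_wf K -> is_gcp K p' -> cfg_obl (lift p' K, p ++ p') y ->
  exists g0 r0, K g0 /\ obl_pos (gobl g0) r0 /\ y = p ++ r0 /\ prefix p' r0.
Proof.
  intros HG Hg (g & r & [g0 [HK ->]] & [l (l1 & q1 & Ho & E)] & ->). simpl in *.
  injection E as -> ->. pose proof (gcp_prefix_obl _ _ _ _ _ HG Hg HK Ho) as P.
  exists g0, q1. repeat split; auto; [now exists l1|].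
  now rewrite <- app_assoc, <- (drop_prefix_eq _ _ P).
Qed.

Lemma reduce_covers (mo : term F V * pos -> Prop) f ys r d u :
  mo (App f ys, r) -> length ys = ar f -> subterm (App f ys) d = Some u -> ~ is_var u ->
  d = [] \/ exists l' e, reduce ar mo f r (l', r ++ e) /\ prefix e d.
Proof.
  intros Hm Hlen Hsu Hnv. destruct d as [|i d]; [now left|right].
  simpl in Hsu. destruct i as [|j]; [discriminate|].
  destruct (nth_error ys j) as [y|] eqn:Ey; [|discriminate].
  exists y, [S j]. split; [|now exists d].
  right. exists (App f ys), (S j), y. repeat split; auto.
  - lia.
  - rewrite <- Hlen. apply nth_error_Some. congruence.
  - simpl. now rewrite Ey.
  - intros [x ->]. destruct d; [injection Hsu as <-; apply Hnv; now exists x|discriminate].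
Qed.

Lemma deriv_covered anc s p f g0 l q0 d u :
  cfg_inv anc (s, p) -> deriv s f g0 -> gann g0 = (l, q0) -> subterm l d = Some u -> ~ is_var u ->
  In (p ++ q0 ++ d) ((p ++ L s) :: anc) \/ exists l' e, gobl g0 (l', q0 ++ e) /\ prefix e d.
Proof.
  intros Hc Hd Ha Hsu Hnv. destruct Hc as (Hr & _ & _ & _ & Hcov).
  destruct Hd as [(mo & ma & Hs & (l'' & Hm'' & Hh) & Hne & ->)|[[Hs Hn]|(l1 & i & Hl1 & Hi & ->)]].
  - simpl in Ha. subst ma.
    destruct (Hcov _ _ _ Hs eq_refl d u Hsu Hnv) as [H|(l' & e & Hm & Hpre)]; [left; now right|].
    destruct (list_eq_dec PeanoNat.Nat.eq_dec (q0 ++ e) (L s)) as [E|E].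
    2:{ right. exists l', e. split; auto. left. split; auto. }
    destruct (proj1 (reachable_wf _ Hr) _ Hs) as (Hin & _ & Hob). simpl in Hin, Hob.
    rewrite E in Hm.
    destruct (Hob _ _ Hm'') as (d1 & Hd1 & Hs1 & _).
    destruct (Hob _ _ Hm) as (d2 & Hd2 & Hs2 & _).
    rewrite Hd1 in Hd2, E. apply app_inv_head in Hd2, E. subst d2 e.
    rewrite Hs1 in Hs2. injection Hs2 as <-.
    destruct l'' as [x|g ys]; [discriminate|]. injection Hh as ->.
    destruct Hpre as [d2 ->]. rewrite (subterm_app_some _ _ _ _ Hs1) in Hsu.
    destruct (reduce_covers mo f ys (L s) d2 u Hm'' (proj1 (lhs_wf _ Hin) _ _ _ Hs1) Hsu Hnv)
      as [->|(l' & e & Hred & Pe)].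
    + left. left. now rewrite app_nil_r, Hd1.
    + right. exists l', (d1 ++ e). split; [now rewrite app_assoc, <- Hd1|now apply prefix_app_l].
  - destruct (Hcov _ _ _ Hs Ha d u Hsu Hnv) as [H|H]; auto. left. now right.
  - injection Ha as -> <-. right. exists l, []. split; [simpl; now rewrite app_nil_r|now exists d].
Qed.

Lemma cfg_obl_antichain s p y1 y2 :
  reachable s -> cfg_obl (s, p) y1 -> cfg_obl (s, p) y2 -> prefix y1 y2 -> y1 = y2.
Proof.
  intros Hr (g1 & r1 & H1 & Ho1 & ->) (g2 & r2 & H2 & Ho2 & ->) Hp. f_equal.
  exact (proj2 (reachable_wf _ Hr) _ _ _ _ H1 H2 Ho1 Ho2 (prefix_app_l_inv _ _ _ Hp)).
Qed.

Lemma delta_obl s p f s' p' y : reachable s -> delta s f (s', p') -> cfg_obl (s', p ++ p') y ->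
  (cfg_obl (s, p) y /\ y <> p ++ L s) \/ exists i, y = (p ++ L s) ++ [i].
Proof.
  intros Hr (K & HK & Hg & E) Hy. simpl in *. subst s'.
  destruct (lift_obl K p p' y (dep_class_wf _ _ _ Hr HK) Hg Hy) as (g0 & r0 & HK0 & Ho0 & -> & _).
  destruct (deriv_obl_pos s f g0 r0 (dep_class_sub _ _ _ HK HK0) Ho0)
    as [(g1 & Hs1 & Ho1 & Hne)|[i ->]].
  - left. split; [exists g1, r0; auto|]. intros E. apply app_inv_head in E. auto.
  - right. exists i. now rewrite app_assoc.
Qed.

Lemma delta_cfg_inv anc s p f s' p' :
  cfg_inv anc (s, p) -> delta s f (s', p') -> cfg_inv ((p ++ L s) :: anc) (s', p ++ p').
Proof.
  intros Hc Hd. pose proof (cfg_obl_ipos _ _ Hc) as Hip.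
  destruct Hc as (Hr & Hanc & Hnanc & Hcl & Hcov). simpl in Hr.
  repeat split.
  - eapply reachS; [exact Hr|exact Hd].
  - intros y z Hy Hz. destruct (delta_obl _ _ _ _ _ _ Hr Hd Hy) as [[Hy' _]|[i ->]].
    + right. eapply Hanc; eauto.
    + destruct (sprefix_snoc _ _ _ Hz) as [->|Hz']; [now left|]. right. eapply Hanc; eauto.
  - intros y Hy Hin. destruct (delta_obl _ _ _ _ _ _ Hr Hd Hy) as [[Hy' Hne]|[i ->]].
    + destruct Hin as [E|Hin]; [congruence|]. eapply Hnanc; eauto.
    + destruct Hin as [E|Hin]; [exact (snoc_neq_prefix (p ++ L s) _ i (prefix_refl _) E)|].
      apply (Hnanc _ Hip). eapply Hcl; [exact Hin|]. split; [apply prefix_app|].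
      exact (snoc_neq_prefix (p ++ L s) _ i (prefix_refl _)).
  - intros y z [<-|Hy] Hz; right; [eapply Hanc|eapply Hcl]; eauto.
  - destruct Hd as (K & HK & Hg & E). simpl in E. subst s'.
    intros g l q' [g0 [HK0 ->]] Ha d u Hsu Hnv. simpl in Ha.
    destruct (gann g0) as [l0 q0] eqn:Eg. injection Ha as -> <-.
    assert (Pq : prefix p' q0) by (pose proof (proj1 Hg _ HK0) as X; now rewrite Eg in X).
    destruct (deriv_covered anc s p f g0 l q0 d u (conj Hr (conj Hanc (conj Hnanc (conj Hcl Hcov))))
                (dep_class_sub _ _ _ HK HK0) Eg Hsu Hnv) as [H|(l' & e & Ho & Pe)].
    + left. simpl. rewrite (drop_prefix_eq _ _ Pq), !app_assoc in H. now rewrite !app_assoc.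
    + right. exists l', e. split; auto. exists l', (q0 ++ e). split; auto.
      now rewrite drop_prefix_app_r.
Qed.

Lemma delta_region_sub anc s p f s' p' y :
  cfg_inv anc (s, p) -> delta s f (s', p') -> cfg_region (s', p ++ p') y ->
  cfg_region (s, p) y /\ y <> p ++ L s.
Proof.
  intros Hc Hd [y0 [Hy0 Py]]. pose proof (cfg_obl_ipos _ _ Hc) as Hip. destruct Hc as (Hr & _).
  destruct (delta_obl _ _ _ _ _ _ Hr Hd Hy0) as [[Hy0' Hne]|[i ->]].
  - split; [exists y0; auto|]. intros ->. apply Hne.
    exact (cfg_obl_antichain _ _ _ _ Hr Hy0' Hip Py).
  - split.
    + exists (p ++ L s). split; auto. eapply prefix_trans; [apply prefix_app|exact Py].
    + intros ->. exact (snoc_neq_prefix _ _ i Py eq_refl).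
Qed.

Lemma delta_region_disjoint anc s p f s1 p1 s2 p2 y :
  cfg_inv anc (s, p) -> delta s f (s1, p1) -> delta s f (s2, p2) ->
  (s1, p ++ p1) <> (s2, p ++ p2) -> cfg_region (s1, p ++ p1) y -> cfg_region (s2, p ++ p2) y ->
  False.
Proof.
  intros (Hr & _) Hd1 Hd2 Hne [y1 [Hy1 P1]] [y2 [Hy2 P2]].
  pose proof (deriv_reachable_wf s f Hr) as HGD.
  destruct Hd1 as (K1 & HK1 & Hg1 & E1), Hd2 as (K2 & HK2 & Hg2 & E2). simpl in *. subst s1 s2.
  destruct (lift_obl K1 p p1 y1 (dep_class_wf _ _ _ Hr HK1) Hg1 Hy1) as (g1 & r1 & HK1' & Ho1 & -> & _).
  destruct (lift_obl K2 p p2 y2 (dep_class_wf _ _ _ Hr HK2) Hg2 Hy2) as (g2 & r2 & HK2' & Ho2 & -> & _).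
  pose proof (dep_class_sub _ _ _ HK1 HK1') as D1. pose proof (dep_class_sub _ _ _ HK2 HK2') as D2.
  assert (Er : r1 = r2).
  { destruct (prefix_comparable _ _ _ P1 P2) as [H|H]; apply prefix_app_l_inv in H.
    - exact (proj2 HGD _ _ _ _ D1 D2 Ho1 Ho2 H).
    - symmetry. exact (proj2 HGD _ _ _ _ D2 D1 Ho2 Ho1 H). }
  subst r2.
  assert (EK : K1 = K2) by (apply (dep_class_eq _ _ _ g1 g2 HK1 HK2 HK1' HK2'); exists r1; auto).
  subst K2. rewrite (gcp_unique _ _ _ Hg1 Hg2) in Hne. now apply Hne.
Qed.

Lemma expanded_bud_inv t anc s p kids f args :
  cfg_inv anc (s, p) -> subterm t (p ++ L s) = Some (App f args) ->
  (forall c, In c kids <-> exists s' p', delta s f (s', p') /\ c = Bud s' (p ++ p')) ->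
  tree_inv t anc (Node s p kids).
Proof.
  intros Hc Ht Hkids. apply (tree_inv_node t anc s p kids f args Hc Ht).
  - intros cf. rewrite in_map_iff. split.
    + intros (k & <- & Hk). apply Hkids in Hk as (s' & p' & Hd & ->). eauto.
    + intros (s' & p' & Hd & ->). exists (Bud s' (p ++ p')). split; auto. apply Hkids. eauto.
  - intros k Hk. apply Hkids in Hk as (s' & p' & Hd & ->). constructor. eapply delta_cfg_inv; eauto.
  - intros k y Hk Hy. apply Hkids in Hk as (s' & p' & Hd & ->). eapply delta_region_sub; eauto.
  - intros k1 k2 Hk1 Hk2 E. apply Hkids in Hk1 as (s1 & p1 & _ & ->).
    apply Hkids in Hk2 as (s2 & p2 & _ & ->). now injection E as -> ->.
  - intros k1 k2 y Hk1 Hk2 E. apply Hkids in Hk1 as (s1 & p1 & Hd1 & ->).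
    apply Hkids in Hk2 as (s2 & p2 & Hd2 & ->). eapply delta_region_disjoint; eauto.
Qed.

Lemma grow_tree_inv t s p kids f args anc a b :
  subterm t (p ++ L s) = Some (App f args) ->
  (forall c, In c kids <-> exists s' p', delta s f (s', p') /\ c = Bud s' (p ++ p')) ->
  tree_inv t anc a -> GrowR s p kids a b -> tree_inv t anc b.
Proof.
  intros Ht Hkids HT. revert b.
  induction HT as [anc s0' p0 Hc|anc s0' p0 cs f0 args0 Hc Hsub Hroots HTk IH Hsubk Heqk Hdisj];
    intros b Hg; inversion Hg as [|? ? Hne|? ? ? cs' HF]; subst.
  - eapply expanded_bud_inv; eauto.
  - now constructor.
  - assert (Hmap : map root_cfg cs = map root_cfg cs')
      by (eapply Forall2_map_eq; [exact HF|]; apply grow_root).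
    assert (Hback : forall k', In k' cs' -> exists k, In k cs /\ GrowR s p kids k k' /\
                      root_cfg k = root_cfg k').
    { intros k' Hk'. destruct (Forall2_in_r _ _ _ _ HF Hk') as (k & Hk & Hgk).
      exists k. repeat split; auto. eapply grow_root; eauto. }
    apply (tree_inv_node t anc s0' p0 cs' f0 args0 Hc Hsub).
    + intros cf. rewrite <- Hmap. apply Hroots.
    + intros k' Hk'. destruct (Hback _ Hk') as (k & Hk & Hgk & _). eauto.
    + intros k' y Hk' Hy. destruct (Hback _ Hk') as (k & Hk & _ & Ek). rewrite <- Ek in *. eauto.
    + intros k1' k2' Hk1' Hk2' E.
      destruct (Hback _ Hk1') as (k1 & Hk1 & Hg1 & E1), (Hback _ Hk2') as (k2 & Hk2 & Hg2 & E2).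
      rewrite <- E1, <- E2 in E. pose proof (Heqk _ _ Hk1 Hk2 E). subst k2.
      eapply grow_functional; eauto.
    + intros k1' k2' y Hk1' Hk2'.
      destruct (Hback _ Hk1') as (k1 & Hk1 & _ & E1), (Hback _ Hk2') as (k2 & Hk2 & _ & E2).
      rewrite <- E1, <- E2. eauto.
Qed.

Lemma cfg_ipos_not_below anc s p q :
  cfg_inv anc (s, p) -> ~ In q anc -> q <> p ++ L s -> ~ prefix q (p ++ L s).
Proof.
  intros Hc Hq Hne Hp. pose proof (cfg_obl_ipos _ _ Hc) as Hip.
  apply Hq. destruct Hc as (_ & Hanc & _). eapply Hanc; [exact Hip|]. split; auto.
Qed.

Lemma prune_tree_inv t q w anc ct : subterm t q <> None ->
  tree_inv t anc ct -> ~ In q anc -> tree_inv (replace q t w) anc (prune L ct q).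
Proof.
  intros Hv HT.
  induction HT as [anc s p Hc|anc s p cs f args Hc Hsub Hroots HTk IH Hsubk Heqk Hdisj];
    intros Hq; [now constructor|].
  destruct (list_eq_dec PeanoNat.Nat.eq_dec (p ++ L s) q) as [<-|E].
  - rewrite prune_node_here. now constructor.
  - rewrite prune_node by auto.
    destruct (replace_keeps_head t q w _ f args Hv Hsub
                (cfg_ipos_not_below anc s p q Hc Hq (not_eq_sym E))) as [args' Hsub'].
    assert (Hmap : map root_cfg (map (fun c => prune L c q) cs) = map root_cfg cs).
    { rewrite map_map. apply map_ext. intros. apply prune_root. }
    apply (tree_inv_node _ anc s p _ f args' Hc Hsub').
    + intros cf. rewrite Hmap. apply Hroots.
    + intros k' Hk'. apply in_map_iff in Hk' as (k & <- & Hk). apply IH; auto. intros [H|H]; auto.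
    + intros k' y Hk' Hy. apply in_map_iff in Hk' as (k & <- & Hk). rewrite prune_root in Hy. eauto.
    + intros k1' k2' Hk1' Hk2' Er. apply in_map_iff in Hk1' as (k1 & <- & Hk1).
      apply in_map_iff in Hk2' as (k2 & <- & Hk2). rewrite !prune_root in Er.
      now rewrite (Heqk _ _ Hk1 Hk2 Er).
    + intros k1' k2' y Hk1' Hk2' Er. apply in_map_iff in Hk1' as (k1 & <- & Hk1).
      apply in_map_iff in Hk2' as (k2 & <- & Hk2). rewrite !prune_root in *. eauto.
Qed.

Notation reports X cf t := (matches_gen ar R L X (fst cf) (snd cf) t).

Lemma reported_match_positions t ct A X Xk l r q :
  tree_inv t [] ct -> desc A X ct -> reports Xk (root_cfg X) t ((l, r), q) ->
  (exists d0 u0, subterm l d0 = Some u0 /\ ~ is_var u0 /\ ipos X = q ++ d0) /\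
  (forall d u, subterm l d = Some u -> ~ is_var u -> In (q ++ d) A \/ q ++ d = ipos X).
Proof.
  intros HT Ho Hm. pose proof (tree_inv_cfg _ _ _ (tree_inv_desc _ _ _ _ _ HT Ho)) as Hc.
  rewrite app_nil_r in Hc. unfold ipos, cfg_ipos in *.
  destruct (root_cfg X) as [s p0]. simpl in *.
  destruct Hm as (f & args & q' & Hsub & (Hin & _ & xs & Hlen & Hvars & Hs) & Eq).
  simpl in *. subst q.
  destruct Hc as (Hr & _ & _ & _ & Hcov).
  destruct (proj1 (reachable_wf _ Hr) _ Hs) as (_ & _ & Hob). simpl in Hob.
  destruct (Hob (App f xs) (L s) eq_refl) as (d0 & Hd0 & Hs0 & Hnv0).
  split; [exists d0, (App f xs); repeat split; auto; now rewrite Hd0, app_assoc|].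
  intros d u Hsu Hnv. destruct (Hcov _ _ _ Hs eq_refl d u Hsu Hnv) as [H|(l' & e & He & Pe)].
  - left. simpl in H. now rewrite app_assoc in H.
  - right. simpl in He. injection He as -> He. rewrite Hd0 in He. apply app_inv_head in He. subst e.
    destruct Pe as [r' ->]. rewrite (subterm_app_some _ _ _ _ Hs0) in Hsu.
    now rewrite (subterm_app_vars f xs r' u Hvars Hsu Hnv), app_nil_r, Hd0, app_assoc.
Qed.

(* The position inspected by a reporting node lies on the redex pattern, while all
   other pattern positions are inspected by its ancestors; by [desc_unique] this
   pins the node down. *)
Lemma reporting_node_unique t ct A X B Y Xk1 Xk2 it :
  tree_inv t [] ct -> desc A X ct -> desc B Y ct ->
  reports Xk1 (root_cfg X) t it -> reports Xk2 (root_cfg Y) t it -> X = Y /\ A = B.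
Proof.
  intros HT HoX HoY HX HY. destruct it as [[l r] q].
  destruct (reported_match_positions _ _ _ _ _ _ _ _ HT HoX HX) as [(d1 & u1 & Hs1 & Hn1 & E1) NX].
  destruct (reported_match_positions _ _ _ _ _ _ _ _ HT HoY HY) as [(d2 & u2 & Hs2 & Hn2 & E2) NY].
  eapply (desc_unique t [] ct); eauto; [rewrite E1; apply (NY _ _ Hs1 Hn1)|].
  rewrite E2. apply (NX _ _ Hs2 Hn2).
Qed.

Lemma subtree_at_contains t ct p c A X :
  tree_inv t [] ct -> subtree_at L ct p c -> desc A X ct -> is_node X -> (In p A \/ ipos X = p) ->
  InNode (root_cfg X) c.
Proof.
  intros HT [Hst Hp] HoX HnX H. destruct (subtree_desc L _ _ Hst) as [Ac Hoc].
  destruct H as [H|H].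
  - destruct (desc_split L _ _ _ _ HoX H) as (A1 & A2 & Z & HoZ & HoXZ & HiZ & _).
    assert (Z = c) as ->.
    { apply (desc_unique t [] ct _ _ _ _ HT HoZ Hoc); right; rewrite HiZ; [exact (eq_sym Hp)|exact Hp]. }
    exact (desc_innode L _ _ _ HoXZ HnX).
  - assert (X = c) as ->.
    { apply (desc_unique t [] ct _ _ _ _ HT HoX Hoc); right; rewrite H; [exact (eq_sym Hp)|exact Hp]. }
    exact (desc_innode L [] _ _ (desc_refl L _) HnX).
Qed.

Lemma subtree_at_reporter t ct p c A X Xk1 Xk2 it :
  tree_inv t [] ct -> subtree_at L ct p c -> desc A X ct ->
  (exists sq, InNode sq c /\ reports Xk1 sq t it) -> reports Xk2 (root_cfg X) t it ->
  In p A \/ ipos X = p.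
Proof.
  intros HT [Hst Hp] HoX (sq & Hin & Hm) HX.
  destruct (subtree_desc L _ _ Hst) as [Ac Hoc].
  destruct (innode_desc L _ _ Hin) as (AY & Y & HoY & _ & <-).
  destruct (reporting_node_unique _ _ _ _ _ _ _ _ _ HT HoX (desc_trans L _ _ _ _ _ Hoc HoY) HX Hm)
    as [<- ->].
  destruct (desc_root_or_below L _ _ _ HoY) as [[-> ->]|H]; [now right|].
  left. apply in_or_app. left. now rewrite <- Hp.
Qed.

Lemma replace_keeps_reports t ct p w A X Xk it :
  tree_inv t [] ct -> desc A X ct -> is_node X -> ~ In p A -> ipos X <> p -> subterm t p <> None ->
  (reports Xk (root_cfg X) (replace p t w) it <-> reports Xk (root_cfg X) t it).
Proof.
  intros HT Ho (s & p0 & kids & ->) Hp Hne Hv.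
  pose proof (tree_inv_desc _ _ _ _ _ HT Ho) as HTX. rewrite app_nil_r in HTX.
  inversion HTX as [|? ? ? ? f args Hc Hsub]; subst.
  destruct (replace_keeps_head t p w _ f args Hv Hsub
              (cfg_ipos_not_below A s p0 p Hc Hp (not_eq_sym Hne))) as [args' Hsub'].
  simpl. split; intros (f1 & a1 & q & M1 & M2 & M3).
  - rewrite Hsub' in M1. injection M1 as <- <-. exists f, args, q. auto.
  - rewrite Hsub in M1. injection M1 as <- <-. exists f, args', q. auto.
Qed.

Lemma rewrite_pos_not_above t ct A X p y :
  tree_inv t [] ct -> desc A X ct -> ~ In p A -> ipos X <> p -> (In y A \/ y = ipos X) ->
  ~ prefix p y.
Proof.
  intros HT Ho Hp Hne Hy Hpy.
  pose proof (tree_inv_cfg _ _ _ (tree_inv_desc _ _ _ _ _ HT Ho)) as Hc. rewrite app_nil_r in Hc.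
  pose proof (cfg_obl_ipos _ _ Hc) as Hip. destruct Hc as (_ & Hanc & _ & Hcl & _).
  destruct (list_eq_dec PeanoNat.Nat.eq_dec p y) as [<-|E]; [destruct Hy; auto|].
  apply Hp. destruct Hy as [Hy| ->]; [eapply Hcl|eapply Hanc]; eauto; split; auto.
Qed.

(** * A finished tree reports every redex *)

Definition reported ct t it : Prop :=
  exists sq, InNode sq ct /\
    (matches_L ar R L (fst sq) (snd sq) t it \/ matches_NL ar R L (fst sq) (snd sq) t it).

Lemma deriv_goal_in_kid t anc s p0 kids f args G :
  tree_inv t anc (Node s p0 kids) -> subterm t (p0 ++ L s) = Some (App f args) -> deriv s f G ->
  exists k s' p', In k kids /\ root_cfg k = (s', p0 ++ p') /\ s' (lift_goal p' G) /\
    prefix p' (snd (gann G)) /\ (forall l r, gobl G (l, r) -> prefix p' r).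
Proof.
  intros HT Ht HG. inversion HT as [|anc' s1 p1 kids1 f0 args0 Hc Hsub Hroots]; subst.
  rewrite Ht in Hsub. injection Hsub as <- <-.
  set (K := fun g => deriv s f g /\
          clos_refl_trans _ (fun x y => deriv s f x /\ deriv s f y /\ ddep x y) G g).
  assert (HK : dep_class (deriv s f) K) by (exists G; split; auto; intros g'; unfold K; tauto).
  assert (HKG : K G) by (split; auto; apply rt_refl).
  destruct (gcp_exists K (ex_intro _ G HKG)) as [p' Hg].
  assert (Hin' : In (lift p' K, p0 ++ p') (map root_cfg kids))
    by (apply Hroots; exists (lift p' K), p'; split; auto; exists K; auto).
  apply in_map_iff in Hin' as (k & Hrk & Hk).
  exists k, (lift p' K), p'. repeat split; auto; [exists G; auto|exact (proj1 Hg G HKG)|].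
  intros l r Ho. exact (gcp_prefix_obl K p' G l r (dep_class_wf _ _ _ (proj1 Hc) HK) Hg HKG Ho).
Qed.

(* A goal whose obligations cannot be reduced further consists of the single
   obligation [f(x_1,...,x_n)@r]: it is exactly what [out] reports. *)
Lemma irreducible_obligation (mo : term F V * pos -> Prop) f ys r l q' :
  goal_wf (Goal mo (l, q')) -> mo (App f ys, r) -> ~ (exists e, reduce ar mo f r e) ->
  mo = (fun e => e = (App f ys, r)) /\ Forall is_var ys.
Proof.
  intros (Hinl & _ & Hob) Hm Hne. simpl in Hob.
  destruct (Hob _ _ Hm) as (d & Hd & Hsd & _).
  assert (Hlen : length ys = ar f) by exact (proj1 (lhs_wf _ Hinl) _ _ _ Hsd).
  split.
  - apply functional_extensionality. intros [l2 r2]. apply propositional_extensionality.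
    split; [|now intros [= -> ->]].
    intros Hm2. destruct (list_eq_dec PeanoNat.Nat.eq_dec r2 r) as [->|E].
    + destruct (Hob _ _ Hm2) as (d2 & Hd2 & Hsd2 & _). rewrite Hd in Hd2.
      apply app_inv_head in Hd2. subst d2. rewrite Hsd in Hsd2. now injection Hsd2 as <-.
    + exfalso. apply Hne. exists (l2, r2). left. split; auto.
  - apply Forall_forall. intros y Hy. apply NNPP. intros Hny.
    apply In_nth_error in Hy as [j Hj]. apply Hne.
    exists (y, r ++ [S j]). right. exists (App f ys), (S j), y. repeat split; auto.
    + lia.
    + rewrite <- Hlen. apply nth_error_Some. congruence.
    + simpl. now rewrite Hj.
Qed.

(* Follow the goal announcing [l] down the tree: at each node it is either reduced
   or kept, until its obligation is a flat pattern, which [out] then reports. *)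
Lemma goal_redex_reported t anc X : tree_inv t anc X -> (forall sq, ~ InBud sq X) ->
  forall s p0 G l q' sigma r, root_cfg X = (s, p0) -> s G -> gann G = (l, q') ->
  subterm t (p0 ++ q') = Some (subst sigma l) -> In (l, r) R ->
  reported X t ((l, r), p0 ++ q').
Proof.
  intros HT. induction HT as [anc s p Hc|anc s p kids f args Hc Hsub Hroots HTk IH Hsubk Heqk Hdisj];
    intros Hnb s1 p1 G l q' sigma r Hroot HG Hann Hq Hin; [exfalso; apply (Hnb (s, p)); constructor|].
  injection Hroot as <- <-. pose proof (proj1 Hc) as Hr.
  assert (Hkid : forall G', deriv s f G' -> gann G' = (l, q') -> reported (Node s p kids) t ((l, r), p ++ q')).
  { intros G' HG' Hann'.
    destruct (deriv_goal_in_kid t anc s p kids f args G'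
                (tree_inv_node t anc s p kids f args Hc Hsub Hroots HTk Hsubk Heqk Hdisj) Hsub HG')
      as (k & s' & p' & Hk & Hrk & Hs' & Pq & _).
    rewrite Hann' in Pq. simpl in Pq.
    assert (Hnbk : forall sq, ~ InBud sq k) by (intros sq Hb; apply (Hnb sq); econstructor; eauto).
    edestruct (IH k Hk Hnbk s' (p ++ p') (lift_goal p' G') l (drop_prefix p' q') sigma r Hrk Hs')
      as (sq & Hsq1 & Hsq2).
    - simpl. now rewrite Hann'.
    - now rewrite <- app_assoc, <- (drop_prefix_eq _ _ Pq).
    - exact Hin.
    - exists sq. rewrite <- app_assoc, <- (drop_prefix_eq _ _ Pq) in Hsq2. split; auto. econstructor; eauto. }
  destruct G as [mo ma]. simpl in Hann. subst ma.
  pose proof (proj1 (reachable_wf _ Hr) _ HG) as Hwf.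
  destruct (classic (obl_pos mo (L s))) as [[l' Hl']|Hno].
  2:{ apply (Hkid (Goal mo (l, q'))); [right; left; split; auto|reflexivity]. }
  pose proof Hwf as (Hinl & _ & Hob). simpl in Hob.
  destruct (Hob _ _ Hl') as (d & Hd & Hsd & Hnv).
  destruct l' as [x|g ys]; [exfalso; apply Hnv; now exists x|].
  assert (Hts : subterm t (p ++ L s) = Some (App g (map (subst sigma) ys))).
  { rewrite Hd, app_assoc, (subterm_app_some _ _ _ _ Hq). apply (subterm_subst sigma _ _ _ Hsd). }
  rewrite Hsub in Hts. injection Hts as <- _.
  destruct (classic (exists e, reduce ar mo f (L s) e)) as [Hred|Hred].
  - apply (Hkid (Goal (reduce ar mo f (L s)) (l, q'))); [|reflexivity].
    left. exists mo, (l, q'). repeat split; auto. exists (App f ys). auto.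
  - destruct (irreducible_obligation mo f ys (L s) l q' Hwf Hl' Hred) as [Hmo Hvars].
    assert (Hout : forall Xk : term F V -> Prop, Xk l -> out_gen ar R L Xk s f ((l, r), q')).
    { intros Xk HXk. repeat split; auto. exists ys. repeat split; auto.
      - exact (proj1 (lhs_wf _ Hinl) _ _ _ Hsd).
      - rewrite <- Hmo. exact HG. }
    exists (s, p). split; [constructor|].
    destruct (classic (linear l)); [left|right]; exists f, args, q'; auto.
Qed.

Lemma obligation_inspected t anc X : tree_inv t anc X -> (forall sq, ~ InBud sq X) ->
  forall s p0 G y, root_cfg X = (s, p0) -> s G -> (exists e, gobl G e) ->
  (forall l r, gobl G (l, r) -> p0 ++ r = y) ->
  exists A Z, desc A Z X /\ is_node Z /\ ipos Z = y.
Proof.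
  intros HT. induction HT as [anc s p Hc|anc s p kids f args Hc Hsub Hroots HTk IH Hsubk Heqk Hdisj];
    intros Hnb s1 p1 G y Hroot HG Hne Hob; [exfalso; apply (Hnb (s, p)); constructor|].
  injection Hroot as <- <-.
  destruct (list_eq_dec PeanoNat.Nat.eq_dec (p ++ L s) y) as [E|E].
  { exists [], (Node s p kids). repeat split; [constructor|do 3 eexists; reflexivity|exact E]. }
  assert (HD : deriv s f G) by (right; left; split; auto; intros [l Hl]; exact (E (Hob _ _ Hl))).
  destruct (deriv_goal_in_kid t anc s p kids f args G
              (tree_inv_node t anc s p kids f args Hc Hsub Hroots HTk Hsubk Heqk Hdisj) Hsub HD)
    as (k & s' & p' & Hk & Hrk & Hs' & _ & Hpo).
  assert (Hnbk : forall sq, ~ InBud sq k) by (intros sq Hb; apply (Hnb sq); econstructor; eauto).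
  destruct (IH k Hk Hnbk s' (p ++ p') (lift_goal p' G) y Hrk Hs') as (A & Z & Ho & Hn & Hi).
  - destruct Hne as [[l r] He]. exists (l, drop_prefix p' r). simpl. eauto.
  - intros l r (l1 & r1 & Ho & E1). injection E1 as -> ->.
    rewrite <- app_assoc, <- (drop_prefix_eq _ _ (Hpo _ _ Ho)). exact (Hob _ _ Ho).
  - exists (A ++ [p ++ L s]), Z. split; [econstructor; eauto|auto].
Qed.

Lemma fresh_goal_in_deriv s f (args : list (term F V)) l j :
  In l (lhs R) -> length args = ar f -> nth_error args j <> None ->
  deriv s f (Goal (fun e => e = (l, L s ++ [S j])) (l, L s ++ [S j])).
Proof.
  intros Hl Hlen Hj. right. right. exists l, (S j). repeat split; auto; [lia|].
  rewrite <- Hlen. now apply nth_error_Some.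
Qed.

(* Induction on the position: the argument position [y.j] of the node inspecting [y]
   is announced by a fresh goal, which some descendant node eventually inspects. *)
Lemma app_position_inspected t ct : tree_inv t [] ct -> root_cfg ct = (s0 R, []) ->
  (forall sq, ~ InBud sq ct) -> wf ar t ->
  forall y f args, subterm t y = Some (App f args) ->
  exists A Z, desc A Z ct /\ is_node Z /\ ipos Z = y.
Proof.
  intros HT Hroot Hnb Hw y. induction y as [|i y IH] using rev_ind; intros f args Hy.
  - exists [], ct. split; [constructor|]. destruct ct as [s p|s p kids].
    + exfalso. apply (Hnb (s, p)). constructor.
    + injection Hroot as -> ->. split; [do 3 eexists; reflexivity|exact label_s0].
  - rewrite subterm_app in Hy. destruct (subterm t y) as [[x|g gargs]|] eqn:Ev; try discriminate.
    destruct i as [|j]; [discriminate|]. simpl in Hy.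
    destruct (nth_error gargs j) as [a|] eqn:Ea; [|discriminate].
    destruct (IH g gargs eq_refl) as (A & Z & HoZ & (s & p0 & kids & ->) & HiZ).
    unfold ipos, cfg_ipos in HiZ. simpl in HiZ.
    pose proof (tree_inv_desc _ _ _ _ _ HT HoZ) as HTZ. rewrite app_nil_r in HTZ.
    destruct lhs_nonempty as [l1 Hl1].
    assert (Hsub : subterm t (p0 ++ L s) = Some (App g gargs)) by now rewrite HiZ.
    destruct (deriv_goal_in_kid t A s p0 kids g gargs _ HTZ Hsub
                (fresh_goal_in_deriv s g gargs l1 j Hl1 (Hw _ _ _ Ev) ltac:(congruence)))
      as (k & s' & p' & Hk & Hrk & Hs' & _ & Hpo).
    assert (Hnbk : forall sq, ~ InBud sq k)
      by (intros sq Hb; apply (desc_no_bud L _ _ _ HoZ Hnb sq); econstructor; eauto).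
    destruct (obligation_inspected t _ k (tree_inv_kid _ _ _ _ _ _ HTZ Hk) Hnbk s' (p0 ++ p')
                _ (y ++ [S j]) Hrk Hs') as (A2 & Z2 & Ho2 & Hn2 & Hi2).
    + exists (l1, drop_prefix p' (L s ++ [S j])). simpl. eauto.
    + intros l r (l2 & r2 & Ho & E1). injection E1 as -> ->.
      rewrite <- app_assoc, <- (drop_prefix_eq _ _ (Hpo _ _ Ho)). simpl in Ho. injection Ho as -> ->.
      now rewrite app_assoc, HiZ.
    + exists (A2 ++ [p0 ++ L s] ++ A), Z2. split; auto.
      rewrite app_assoc. eapply desc_trans; [exact HoZ|]. econstructor; eauto.
Qed.

Lemma redex_reported t ct l r q sigma : tree_inv t [] ct -> root_cfg ct = (s0 R, []) ->
  (forall sq, ~ InBud sq ct) -> wf ar t -> In (l, r) R -> subterm t q = Some (subst sigma l) ->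
  reported ct t ((l, r), q).
Proof.
  intros HT Hroot Hnb Hw Hin Hq. pose proof (in_lhs _ _ Hin) as Hl.
  destruct q as [|i y] using rev_ind.
  - apply (goal_redex_reported t [] ct HT Hnb (s0 R) [] (Goal (fun e => e = (l, [])) (l, [])) l []
             sigma r Hroot); auto. exists l. auto.
  - pose proof Hq as Hyj. rewrite subterm_app in Hq.
    destruct (subterm t y) as [[x|g gargs]|] eqn:Ev; try discriminate.
    destruct i as [|j]; [discriminate|]. simpl in Hq.
    destruct (nth_error gargs j) as [a|] eqn:Ea; [|discriminate].
    destruct (app_position_inspected t ct HT Hroot Hnb Hw y g gargs Ev)
      as (A & Z & HoZ & (s & p0 & kids & ->) & HiZ).
    unfold ipos, cfg_ipos in HiZ. simpl in HiZ.
    pose proof (tree_inv_desc _ _ _ _ _ HT HoZ) as HTZ. rewrite app_nil_r in HTZ.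
    assert (Hsub : subterm t (p0 ++ L s) = Some (App g gargs)) by now rewrite HiZ.
    destruct (deriv_goal_in_kid t A s p0 kids g gargs _ HTZ Hsub
                (fresh_goal_in_deriv s g gargs l j Hl (Hw _ _ _ Ev) ltac:(congruence)))
      as (k & s' & p' & Hk & Hrk & Hs' & Pq & _).
    simpl in Pq.
    assert (Hnbk : forall sq, ~ InBud sq k)
      by (intros sq Hb; apply (desc_no_bud L _ _ _ HoZ Hnb sq); econstructor; eauto).
    destruct (goal_redex_reported t _ k (tree_inv_kid _ _ _ _ _ _ HTZ Hk) Hnbk s' (p0 ++ p') _ l
                (drop_prefix p' (L s ++ [S j])) sigma r Hrk Hs') as (sq & Hi & Hm); auto.
    + now rewrite <- app_assoc, <- (drop_prefix_eq _ _ Pq), app_assoc, HiZ.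
    + exists sq. split.
      * eapply innode_desc_trans; [exact HoZ|]. econstructor; eauto.
      * now rewrite <- app_assoc, <- (drop_prefix_eq _ _ Pq), app_assoc, HiZ in Hm.
Qed.

(** * The invariant of NormalizeNonLinear *)

Definition pending (st : @pstate F V) it : Prop :=
  preds st it \/ pam st it \/ pen st it \/ pdis st it.

Record run_inv (st : @pstate F V) : Prop := {
  inv_tree : tree_inv (ptm st) [] (pct st);
  inv_root : root_cfg (pct st) = (s0 R, []);
  inv_rules : forall it, pending st it -> In (fst it) R;
  inv_complete : forall it, reported (pct st) (ptm st) it -> pending st it;
  inv_sound : forall it, pam st it \/ pen st it \/ pdis st it ->
    exists sq, InNode sq (pct st) /\ matches_NL ar R L (fst sq) (snd sq) (ptm st) it;
  inv_dis : forall l r q, pdis st ((l, r), q) ->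
    exists u, subterm (ptm st) q = Some u /\ ~ consistent l u;
  inv_wf : wf ar (ptm st) }.

Lemma s0_cfg_inv : cfg_inv [] (s0 R, []).
Proof.
  split; [constructor|]. split; [|split; [|split]].
  - intros y z (g & r & [l [_ ->]] & [l' Ho] & ->) [[x E] Hne]. injection Ho as _ ->.
    destruct z; [simpl in *; congruence|discriminate].
  - intros y _ [].
  - intros y z [].
  - intros g l q' [l0 [_ ->]] Ha d u _ _. injection Ha as -> <-.
    right. exists l, []. split; [reflexivity|now exists d].
Qed.

Lemma init_inv t0 : wf ar t0 -> run_inv (init_pstate R t0).
Proof.
  intros Hw. constructor; cbv [pending set0 init_pstate preds pam pen pdis ptm pct];
    try tauto; auto.
  - constructor. exact s0_cfg_inv.
  - intros it (sq & Hin & _). inversion Hin.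
Qed.

Lemma bud_step_inv st s p f args kids ct' :
  run_inv st -> subterm (ptm st) (p ++ L s) = Some (App f args) ->
  (forall c, In c kids <-> exists s' p', delta s f (s', p') /\ c = Bud s' (p ++ p')) ->
  InBud (s, p) (pct st) -> GrowR s p kids (pct st) ct' ->
  run_inv (PState (ptm st) ct' (setU (preds st) (matches_L ar R L s p (ptm st)))
                  (setU (pam st) (matches_NL ar R L s p (ptm st))) (pdis st) (pen st)).
Proof.
  intros [Hti Hroot HA HM HS HD HW] Hsub Hkids Hbud Hgrow.
  constructor; simpl; unfold pending, setU in *; simpl; auto.
  - exact (grow_tree_inv _ s p kids f args _ _ _ Hsub Hkids Hti Hgrow).
  - now rewrite <- (grow_root _ _ _ _ _ Hgrow).
  - intros it [[H|(? & ? & ? & _ & [Hin _] & _)]|[[H|(? & ? & ? & _ & [Hin _] & _)]|H]]; auto.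
  - intros it (sq & Hin & Hm).
    assert (Hbuds : forall sq' k, In k kids -> ~ InNode sq' k)
      by (intros sq' k Hk Hn; apply Hkids in Hk as (s' & p' & _ & ->); inversion Hn).
    destruct (grow_innode_inv s p kids sq _ _ Hgrow Hbuds Hin) as [H| ->].
    + destruct (HM it (ex_intro _ sq (conj H Hm))) as [X|[X|X]]; tauto.
    + destruct Hm as [Hm|Hm]; simpl in Hm; tauto.
  - intros it [[H|H]|H].
    + destruct (HS it (or_introl H)) as (sq & Hi & Hm). exists sq. eauto using grow_innode.
    + exists (s, p). split; auto. eapply grow_bud_innode; eauto.
    + destruct (HS it (or_intror H)) as (sq & Hi & Hm). exists sq. eauto using grow_innode.
Qed.

Lemma enable_step_inv st rl p :
  run_inv st -> pam st (rl, p) ->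
  run_inv (PState (ptm st) (pct st) (preds st) (setD (pam st) (fun x => x = (rl, p)))
                  (pdis st) (setU (pen st) (fun x => x = (rl, p)))).
Proof.
  intros [Hti Hroot HA HM HS HD HW] Ham.
  constructor; simpl; unfold pending, setU, setD in *; simpl; auto.
  - intros it H. apply HA. decompose [or and] H; subst; tauto.
  - intros it Hrep. destruct (classic (it = (rl, p))) as [->|E]; [tauto|].
    specialize (HM it Hrep). tauto.
  - intros it H. apply HS. decompose [or and] H; subst; tauto.
Qed.

Lemma disable_step_inv st l r p u :
  run_inv st -> pam st ((l, r), p) -> subterm (ptm st) p = Some u -> ~ consistent l u ->
  run_inv (PState (ptm st) (pct st) (preds st) (setD (pam st) (fun x => x = ((l, r), p)))
                  (setU (pdis st) (fun x => x = ((l, r), p))) (pen st)).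
Proof.
  intros [Hti Hroot HA HM HS HD HW] Ham Hsub Hnc.
  constructor; simpl; unfold pending, setU, setD in *; simpl; auto.
  - intros it H. apply HA. decompose [or and] H; subst; tauto.
  - intros it Hrep. destruct (classic (it = ((l, r), p))) as [->|E]; [tauto|].
    specialize (HM it Hrep). tauto.
  - intros it H. apply HS. decompose [or and] H; subst; tauto.
  - intros l' r' q [H|E]; [exact (HD _ _ _ H)|]. injection E as -> -> ->. eauto.
Qed.

Definition subtree_matches (X : term F V -> Prop) c t it : Prop :=
  exists sq, InNode sq c /\ matches_gen ar R L X (fst sq) (snd sq) t it.

Lemma surviving_reporter st p c it :
  run_inv st -> subtree_at L (pct st) p c -> (pam st it \/ pen st it \/ pdis st it) ->
  ~ subtree_matches (fun l => ~ linear l) c (ptm st) it ->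
  exists A X, desc A X (pct st) /\ is_node X /\ ~ In p A /\ ipos X <> p /\
    reports (fun l => ~ linear l) (root_cfg X) (ptm st) it.
Proof.
  intros HI Hsta Hold HnN. destruct (inv_sound _ HI it Hold) as (sq & Hi & Hm).
  destruct (innode_desc L _ _ Hi) as (A & X & Ho & Hn & <-).
  destruct (classic (In p A \/ ipos X = p)) as [Hp|Hp].
  - exfalso. apply HnN. exists (root_cfg X).
    split; [exact (subtree_at_contains _ _ _ _ _ _ (inv_tree _ HI) Hsta Ho Hn Hp)|exact Hm].
  - exists A, X. repeat split; auto; tauto.
Qed.

Lemma rewrite_keeps_inconsistent st p c w l' r' q :
  run_inv st -> subtree_at L (pct st) p c -> subterm (ptm st) p <> None ->
  pdis st ((l', r'), q) -> ~ subtree_matches (fun l => ~ linear l) c (ptm st) ((l', r'), q) ->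
  ~ var_repeated_above l' q p ->
  exists u, subterm (replace p (ptm st) w) q = Some u /\ ~ consistent l' u.
Proof.
  intros HI Hsta Hv Hdis HnN Hrep.
  destruct (inv_dis _ HI _ _ _ Hdis) as (u & Hu & Hnc).
  destruct (surviving_reporter st p c _ HI Hsta (or_intror (or_intror Hdis)) HnN)
    as (A & X & Ho & Hn & HpA & Hne & Hm).
  destruct (reported_match_positions _ _ A X _ l' r' q (inv_tree _ HI) Ho Hm) as [_ Hpos].
  assert (Hl'R : In (l', r') R) by (apply (inv_rules _ HI ((l', r'), q)); unfold pending; tauto).
  destruct HR as [_ HRr]. destruct (HRr _ _ Hl'R) as (Hnvl & _).
  apply (replace_keeps_inconsistent _ w p l' u q Hv Hu Hnc Hnvl); auto.
  intros d v Hd Hnv.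
  exact (rewrite_pos_not_above _ _ A X p (q ++ d) (inv_tree _ HI) Ho HpA Hne (Hpos d v Hd Hnv)).
Qed.

Lemma rewrite_step_inv st l r p c sigma :
  run_inv st -> (preds st ((l, r), p) \/ pen st ((l, r), p)) -> subtree_at L (pct st) p c ->
  subterm (ptm st) p = Some (subst sigma l) ->
  let t := ptm st in
  let N := subtree_matches (fun l => ~ linear l) c t in
  let ML := subtree_matches linear c t in
  let rem := fun it => (setD (pen st) N it \/ setD (pdis st) N it) /\
                       var_repeated_above (fst (fst it)) (snd it) p in
  run_inv (PState (replace p t (subst sigma r)) (prune L (pct st) p) (setD (preds st) ML)
                  (setU (setD (pam st) N) rem) (setD (setD (pdis st) N) rem)
                  (setD (setD (pen st) N) rem)).
Proof.
  intros HI Hsel Hsta Hsubt t N ML rem. pose proof HI as [Hti Hroot HA HM _ _ HW].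
  assert (Hin : In (l, r) R) by (apply (HA ((l, r), p)); unfold pending; tauto).
  assert (Hv : subterm t p <> None) by (unfold t; rewrite Hsubt; discriminate).
  assert (Hfresh : forall A X it Xk, desc A X (pct st) -> ~ In p A -> ipos X <> p ->
            reports Xk (root_cfg X) t it -> ~ N it /\ ~ ML it).
  { intros A X it Xk Ho HpA Hne Hm.
    split; intros HN; destruct (subtree_at_reporter _ _ _ _ _ _ _ Xk it Hti Hsta Ho HN Hm); auto. }
  constructor; cbv [pending setU setD rem] in *; cbn [ptm pct preds pam pen pdis] in *.
  - exact (prune_tree_inv t p (subst sigma r) [] (pct st) Hv Hti (fun H => H)).
  - now rewrite prune_root.
  - intros it H. apply HA. tauto.
  - intros it (sq & Hin' & Hm).
    destruct (prune_innode_inv L (pct st) p sq Hin') as (A & X & Ho & Hn & <- & HpA & Hne).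
    assert (Hold : pending st it /\ ~ N it /\ ~ ML it).
    { destruct Hm as [Hm|Hm];
        apply (replace_keeps_reports t _ p _ A X _ it Hti Ho Hn HpA Hne Hv) in Hm;
        (split; [apply HM; exists (root_cfg X); split; [exact (desc_innode L A X _ Ho Hn)|tauto]
                |exact (Hfresh A X it _ Ho HpA Hne Hm)]). }
    unfold pending in Hold. destruct (classic (var_repeated_above (fst (fst it)) (snd it) p)); tauto.
  - intros it H.
    assert (Hold : (pam st it \/ pen st it \/ pdis st it) /\ ~ N it) by tauto.
    destruct (surviving_reporter st p c it HI Hsta (proj1 Hold) (proj2 Hold))
      as (A & X & Ho & Hn & HpA & Hne & Hm).
    exists (root_cfg X). split; [exact (prune_innode L (pct st) p A X Ho Hn HpA Hne)|].
    exact (proj2 (replace_keeps_reports t _ p _ A X _ it Hti Ho Hn HpA Hne Hv) Hm).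
  - intros l' r' q [[Hdis HnN] Hnrem].
    apply (rewrite_keeps_inconsistent st p c _ l' r' q HI Hsta Hv Hdis HnN).
    intros Hex. apply Hnrem. split; [tauto|exact Hex].
  - exact (wf_rewrite ar R t l r p sigma HR Hin HW Hsubt).
Qed.

Lemma step_inv select st st' : run_inv st -> Step ar R L select st st' ->
  run_inv st' /\ (ptm st' = ptm st \/ rewrite_step R (ptm st) (ptm st')).
Proof.
  intros HI Hs. destruct Hs as [st s p f args kids ct' _ Hbud Hsub Hkids Hgrow
                               |st rl p u _ Ham _ _|st [l r] p u _ Ham Hsub Hnc
                               |st l r p c sigma _ Hsel Hsta Hsubt].
  - split; [exact (bud_step_inv st s p f args kids ct' HI Hsub Hkids Hbud Hgrow)|now left].
  - split; [now apply enable_step_inv|now left].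
  - split; [now apply (disable_step_inv st l r p u)|now left].
  - split; [exact (rewrite_step_inv st l r p c sigma HI Hsel Hsta Hsubt)|].
    right. exists l, r, p, sigma. split; [apply (inv_rules _ HI ((l, r), p)); unfold pending; tauto|auto].
Qed.

Lemma run_inv_rewrites select st1 st2 : clos_refl_trans _ (Step ar R L select) st1 st2 ->
  run_inv st1 -> run_inv st2 /\ rewrites R (ptm st1) (ptm st2).
Proof.
  induction 1 as [x y Hs|x|x y z _ IH1 _ IH2]; intros HI.
  - destruct (step_inv select x y HI Hs) as [HI' [E|E]]; split; auto.
    + rewrite E. apply rt_refl.
    + now apply rt_step.
  - split; auto. apply rt_refl.
  - destruct (IH1 HI) as [HI1 R1]. destruct (IH2 HI1) as [HI2 R2]. split; auto. eapply rt_trans; eauto.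
Qed.

Lemma finished_normal_form st : run_inv st -> finished st -> normal_form R (ptm st).
Proof.
  intros HI (Hnb & Hnp & Hne & Hna) l r q sigma Hin Hsq.
  destruct (inv_complete _ HI _ (redex_reported _ _ l r q sigma (inv_tree _ HI) (inv_root _ HI)
              Hnb (inv_wf _ HI) Hin Hsq)) as [H|[H|[H|H]]];
    [exact (Hnp _ H)|exact (Hna _ H)|exact (Hne _ H)|].
  destruct (inv_dis _ HI _ _ _ H) as (u & Hu & Hnc). rewrite Hsq in Hu. injection Hu as <-.
  apply Hnc, consistent_subst.
Qed.

End Automaton.

Theorem corollary2 (F V : Type) (ar : F -> nat) (HF : finite_type F)
  (R : list (@rule F V)) (HR : isTRS ar R)
  (L : state F V -> pos) (HL : valid_labelling ar R L)
  (t0 : term F V) (Ht0g : ground t0) (Ht0w : wf ar t0)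
  (select : @pstate F V -> @item F V) (Hsel : strategy select)
  (t : term F V) :
  normalize_returns ar R L select t0 t ->
  rewrites R t0 t /\ normal_form R t.
Proof.
  intros (st & Hrun & Hfin & <-).
  destruct (run_inv_rewrites ar R L HR HL select _ _ Hrun (init_inv ar R L t0 Ht0w)) as [HI Hrw].
  split; [exact Hrw|exact (finished_normal_form ar R L HR HL st HI Hfin)].
Qed.
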